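(* For every $\alpha>1$, the Ces\`aro operator $C_1(f)(z)=\int_0^z\frac{f(w)}{w(1-w)}\,dw$ is a bounded linear operator from $(\mathcal{B}_\alpha^0,\|\cdot\|_{\mathcal{B}_\alpha})$ to itself.
   Context: $\mathbb{D}=\{z\in\mathbb{C}:|z|<1\}$. For $\alpha>0$, the $\alpha$-Bloch space $\mathcal{B}_\alpha$ is the space of analytic functions $f$ on $\mathbb{D}$ with $\|f\|_{\mathcal{B}_\alpha}:=\sup_{z\in\mathbb{D}}(1-|z|^2)^\alpha|f'(z)|<\infty$. $\mathcal{B}_\alpha^0=\{f\in\mathcal{B}_\alpha: f(0)=0\}$, normed by $\|\cdot\|_{\mathcal{B}_\alpha}$. *)

From Stdlib Require Import Reals.
From Coquelicot Require Export Coquelicot.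
Open Scope R_scope.

Definition is_cderive (f : C -> C) (z d : C) : Prop :=
  @is_derive C_AbsRing C_NormedModule f z d.

Definition analytic_disc (f : C -> C) : Prop :=
  forall z : C, Cmod z < 1 -> exists d : C, is_cderive f z d.

Definition bloch_bound (alpha : R) (f : C -> C) (M : R) : Prop :=
  forall z d : C, Cmod z < 1 -> is_cderive f z d ->
    Rpower (1 - Cmod z ^ 2) alpha * Cmod d <= M.

Definition in_bloch0 (alpha : R) (f : C -> C) : Prop :=
  analytic_disc f /\ f (RtoC 0) = RtoC 0 /\ exists M : R, bloch_bound alpha f M.

(* Cesaro operator C_1 f (z) = int_0^z f(w)/(w(1-w)) dw, the integral taken
   along the segment [0,z]: w = t z, dw = z dt, t in [0,1]. *)
Definition cesaro1 (f : C -> C) (z : C) : C :=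
  @RInt C_R_CompleteNormedModule
    (fun t : R => let w := Cmult (RtoC t) z in
                  Cmult (Cdiv (f w) (Cmult w (Cminus (RtoC 1) w))) z) 0 1.

(* The derivative of [C_1 f] is the kernel [f z / (z (1 - z))], extended by [f'(0)] at
   [0].  As [f] is only known to be holomorphic, this fundamental theorem of calculus
   rests on Cauchy's theorem for triangles with a vertex at [0]: Goursat's subdivision
   argument applies where the kernel is holomorphic, and a small corner at [0], where
   it is merely continuous, contributes arbitrarily little.  The Bloch bound for
   [C_1 f] is then a pointwise bound on [(1 - |z|^2)^alpha |f z| / (|z| |1 - z|)].
   Integrating [|f'| <= M (1 - |w|)^(-alpha)] along [[0, z]] gives
   [|f z| <= M |z| (1 - |z|)^(-alpha)], good near [0], and, since [alpha > 1],
   [|f z| <= M (1 - |z|)^(1 - alpha) / (alpha - 1)], good near the circle, where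
   [|1 - z| >= 1 - |z|] absorbs the extra factor [1 - |z|]. *)

From Stdlib Require Import Reals Lra Psatz.
From Coquelicot Require Import Coquelicot.
Open Scope R_scope.

Lemma norm_C_R (x : C) : @norm R_AbsRing C_R_NormedModule x = Cmod x.
Proof.
  destruct x as [x y]. unfold Cmod.
  cbv [norm NormedModule.norm NormedModule.mixin C_R_NormedModule NormedModule.class
       prod_NormedModule prod_NormedModule_mixin prod_norm]. simpl.
  change (norm x) with (Rabs x). change (norm y) with (Rabs y).
  rewrite !Rmult_1_r, <- !Rabs_mult, !Rabs_right by (apply Rle_ge, Rle_0_sqr).
  reflexivity.
Qed.

Lemma scal_C_R (r : R) (v : C) : @scal R_AbsRing C_R_NormedModule r v = (RtoC r * v)%C.
Proof.
  destruct v as [x y]. unfold Cmult, RtoC, scal; simpl. unfold prod_scal; simpl.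
  change (scal r x) with (r * x). change (scal r y) with (r * y). f_equal; ring.
Qed.

Lemma plus_C_R (u v : C) : @plus C_R_NormedModule u v = (u + v)%C.
Proof. reflexivity. Qed.

Lemma minus_C_R (u v : C) : @minus C_R_NormedModule u v = (u - v)%C.
Proof. reflexivity. Qed.

Lemma Cmod_RtoC_mult (r : R) (v : C) : Cmod (RtoC r * v) = Rabs r * Cmod v.
Proof. rewrite Cmod_mult, Cmod_R. reflexivity. Qed.

Lemma Cmod_sym (x y : C) : Cmod (x - y) = Cmod (y - x).
Proof. replace (x - y)%C with (- (y - x))%C by ring. apply Cmod_opp. Qed.

Lemma Cmod_via (x y p : C) : Cmod (x - p) <= Cmod (x - y) + Cmod (y - p).
Proof.
  replace (x - p)%C with ((x - y) + (y - p))%C by ring. apply Cmod_triangle.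
Qed.

Lemma Cmod_le_minus (x y : C) : Cmod x <= Cmod (x - y) + Cmod y.
Proof. replace x with ((x - y) + y)%C at 1 by ring. apply Cmod_triangle. Qed.

Lemma Cmod_one_minus_ge (z : C) : 1 - Cmod z <= Cmod (RtoC 1 - z).
Proof.
  pose proof (Cmod_le_minus (RtoC 1) z) as H. rewrite Cmod_1 in H. lra.
Qed.

Lemma Cmult_integral (x y : C) : (x * y)%C = RtoC 0 -> x = RtoC 0 \/ y = RtoC 0.
Proof.
  intros E. apply (f_equal Cmod) in E. rewrite Cmod_mult, Cmod_0 in E.
  destruct (Rmult_integral _ _ E); [left|right]; apply Cmod_eq_0; assumption.
Qed.

Lemma RtoC_neq_0 (x : R) : x <> 0 -> RtoC x <> RtoC 0.
Proof. intros Hx E. apply Hx. exact (f_equal fst E). Qed.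

Lemma Cmod_le_eps_0 (x : C) (K e0 : R) : 0 < e0 ->
  (forall eps, 0 < eps < e0 -> Cmod x <= K * eps) -> x = RtoC 0.
Proof.
  intros He0 H. apply Cmod_eq_0, Rle_antisym; [|apply Cmod_ge_0].
  apply Rnot_lt_le. intros Hx.
  set (eps := Rmin (e0 / 2) (Cmod x / (2 * (Rabs K + 1)))).
  assert (HK : 0 < 2 * (Rabs K + 1)) by (pose proof (Rabs_pos K); lra).
  assert (Heps : 0 < eps) by (apply Rmin_pos; [lra|apply Rdiv_lt_0_compat; lra]).
  assert (Hepsx : eps * (2 * (Rabs K + 1)) <= Cmod x).
  { apply (Rmult_le_reg_r (/ (2 * (Rabs K + 1)))); [apply Rinv_0_lt_compat; lra|].
    rewrite Rmult_assoc, Rinv_r, Rmult_1_r by lra. apply Rmin_r. }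
  assert (Heps0 : eps < e0) by (apply Rle_lt_trans with (e0 / 2); [apply Rmin_l|lra]).
  specialize (H eps (conj Heps Heps0)).
  pose proof (Rle_abs K). nra.
Qed.

(** * Epsilon-delta complex derivatives *)

Definition Cdiff_eps (f : C -> C) (z l : C) : Prop :=
  forall eps, 0 < eps -> exists delta, 0 < delta /\
    forall w, Cmod (w - z) < delta -> Cmod (f w - f z - l * (w - z)) <= eps * Cmod (w - z).

(* [is_cderive] uses the product uniform structure of [C], while the algebraic
   rules of Coquelicot ([is_derive_mult], [is_derive_comp]) are stated for
   [AbsRing_NormedModule C_AbsRing]; the two notions are not convertible but
   unfold to the same epsilon-delta statement, proved by one script. *)
Local Ltac derive_eps_tac :=
  split;
  [ intros [_ H] eps Heps;
    specialize (H _ (fun P HP => HP) (mkposreal eps Heps));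
    apply (@locally_le_locally_norm C_AbsRing (AbsRing_NormedModule C_AbsRing)) in H;
    destruct H as [d Hd]; exists d; split; [apply cond_pos|]; intros w Hw;
    rewrite Cmult_comm; exact (Hd w Hw)
  | intros H; split; [apply is_linear_scal_l|];
    intros x Hx;
    apply (@is_filter_lim_locally_unique C_AbsRing (AbsRing_NormedModule C_AbsRing)) in Hx;
    subst x; intros [eps Heps]; destruct (H eps Heps) as [d [Hd Hw]];
    apply (@locally_norm_le_locally C_AbsRing (AbsRing_NormedModule C_AbsRing));
    exists (mkposreal d Hd); intros w Hbw; generalize (Hw w Hbw);
    rewrite Cmult_comm; exact (fun h => h) ].

Lemma is_cderive_eps (f : C -> C) (z l : C) : is_cderive f z l <-> Cdiff_eps f z l.
Proof. derive_eps_tac. Qed.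

Lemma is_derive_C_eps (f : C -> C) (z l : C) :
  @is_derive C_AbsRing (AbsRing_NormedModule C_AbsRing) f z l <-> Cdiff_eps f z l.
Proof. derive_eps_tac. Qed.

Definition Ccont_at (g : C -> C) (w : C) : Prop :=
  forall eps, 0 < eps -> exists delta, 0 < delta /\
    forall v, Cmod (v - w) < delta -> Cmod (g v - g w) < eps.

Lemma Cdiff_eps_cont (f : C -> C) (z l : C) : Cdiff_eps f z l -> Ccont_at f z.
Proof.
  intros H eps Heps. destruct (H 1 Rlt_0_1) as [d [Hd Hw]].
  pose proof (Cmod_ge_0 l).
  exists (Rmin d (eps / (Cmod l + 2))).
  split; [apply Rmin_pos; [assumption|apply Rdiv_lt_0_compat; lra]|].
  intros v Hv. specialize (Hw v (Rlt_le_trans _ _ _ Hv (Rmin_l _ _))).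
  assert (Hsmall : Cmod (v - z) * (Cmod l + 2) < eps).
  { apply (Rmult_lt_reg_r (/ (Cmod l + 2))); [apply Rinv_0_lt_compat; lra|].
    rewrite Rmult_assoc, Rinv_r, Rmult_1_r by lra.
    exact (Rlt_le_trans _ _ _ Hv (Rmin_r _ _)). }
  replace (f v - f z)%C with ((f v - f z - l * (v - z)) + l * (v - z))%C by ring.
  eapply Rle_lt_trans; [apply Cmod_triangle|]. rewrite Cmod_mult.
  pose proof (Cmod_ge_0 (v - z)). nra.
Qed.

Lemma Ccont_at_const (c w : C) : Ccont_at (fun _ => c) w.
Proof.
  intros eps He. exists 1. split; [lra|]. intros v _.
  replace (c - c)%C with (RtoC 0) by ring. rewrite Cmod_0. exact He.
Qed.

Lemma Ccont_at_minus (f h : C -> C) (w : C) :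
  Ccont_at f w -> Ccont_at h w -> Ccont_at (fun v => f v - h v)%C w.
Proof.
  intros Hf Hh eps He.
  destruct (Hf (eps / 2)) as [d1 [Hd1 H1]]; [lra|].
  destruct (Hh (eps / 2)) as [d2 [Hd2 H2]]; [lra|].
  exists (Rmin d1 d2). split; [apply Rmin_pos; assumption|].
  intros v Hv. specialize (H1 v (Rlt_le_trans _ _ _ Hv (Rmin_l _ _))).
  specialize (H2 v (Rlt_le_trans _ _ _ Hv (Rmin_r _ _))).
  replace (f v - h v - (f w - h w))%C with ((f v - f w) + - (h v - h w))%C by ring.
  eapply Rle_lt_trans; [apply Cmod_triangle|]. rewrite Cmod_opp. lra.
Qed.

Lemma Cdiff_eps_affine (c0 c1 w : C) : Cdiff_eps (fun v => c0 + c1 * v)%C w c1.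
Proof.
  intros eps He. exists 1. split; [lra|]. intros v _.
  replace (c0 + c1 * v - (c0 + c1 * w) - c1 * (v - w))%C with (RtoC 0) by ring.
  rewrite Cmod_0. pose proof (Cmod_ge_0 (v - w)). nra.
Qed.

Lemma Cdiff_eps_ext (F H : C -> C) (z l : C) :
  (forall w, F w = H w) -> Cdiff_eps H z l -> Cdiff_eps F z l.
Proof.
  intros E HH eps He. destruct (HH eps He) as [d [Hd Hw]].
  exists d. split; [exact Hd|]. intros w Hwz. rewrite !E. exact (Hw w Hwz).
Qed.

Lemma Cdiff_eps_Cinv (w : C) : w <> RtoC 0 -> Cdiff_eps Cinv w (- / (w * w))%C.
Proof.
  intros Hw eps He.
  assert (HA : 0 < Cmod w) by (apply Cmod_gt_0; exact Hw).
  set (A := Cmod w) in *.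
  assert (HA3 : 0 < eps * (A * A * A) / 2) by (apply Rdiv_lt_0_compat; [|lra]; repeat apply Rmult_lt_0_compat; lra).
  exists (Rmin (A / 2) (eps * (A * A * A) / 2)). split; [apply Rmin_pos; lra|].
  intros v Hv.
  assert (Hv1 : Cmod (v - w) < A / 2) by exact (Rlt_le_trans _ _ _ Hv (Rmin_l _ _)).
  assert (Hv2 : Cmod (v - w) < eps * (A * A * A) / 2) by exact (Rlt_le_trans _ _ _ Hv (Rmin_r _ _)).
  assert (HV : A / 2 <= Cmod v).
  { pose proof (Cmod_le_minus w v). rewrite (Cmod_sym w v) in H. unfold A in *. lra. }
  assert (Hv0 : v <> RtoC 0) by (intros ->; rewrite Cmod_0 in HV; lra).
  replace (/ v - / w - - / (w * w) * (v - w))%C with ((v - w) * (v - w) / (v * (w * w)))%C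
    by (field; auto).
  rewrite Cmod_div by (intros E; destruct (Cmult_integral _ _ E) as [|E']; auto;
                       destruct (Cmult_integral _ _ E'); auto).
  rewrite !Cmod_mult. fold A.
  set (x := Cmod (v - w)) in *. set (V := Cmod v) in *.
  assert (0 <= x) by apply Cmod_ge_0.
  assert (HVA : 0 < V * (A * A)) by (apply Rmult_lt_0_compat; [lra|apply Rmult_lt_0_compat; lra]).
  apply (Rmult_le_reg_r (V * (A * A))); [exact HVA|].
  unfold Rdiv. rewrite Rmult_assoc, Rinv_l, Rmult_1_r by lra.
  assert (x * x <= x * (eps * (A * A * A) / 2)) by (apply Rmult_le_compat_l; lra).
  assert (A * A * A / 2 <= V * (A * A)) by nra.
  nra.
Qed.

(** * Integrals along segments *)

Definition seg (a b : C) (t : R) : C := (a + RtoC t * (b - a))%C.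

Lemma seg_minus (a b : C) (s t : R) : (seg a b s - seg a b t)%C = (RtoC (s - t) * (b - a))%C.
Proof. unfold seg. rewrite RtoC_minus. ring. Qed.

Lemma Cmod_seg_le (a b : C) (t : R) : 0 <= t <= 1 ->
  Cmod (seg a b t) <= (1 - t) * Cmod a + t * Cmod b.
Proof.
  intros Ht. replace (seg a b t) with (RtoC (1 - t) * a + RtoC t * b)%C
    by (unfold seg; rewrite RtoC_minus; ring).
  eapply Rle_trans; [apply Cmod_triangle|].
  rewrite !Cmod_RtoC_mult, !Rabs_right by lra. lra.
Qed.

Lemma seg_ball (x y p : C) (r t : R) : 0 <= t <= 1 ->
  Cmod (x - p) <= r -> Cmod (y - p) <= r -> Cmod (seg x y t - p) <= r.
Proof.
  intros Ht Hx Hy. replace (seg x y t - p)%C with (seg (x - p) (y - p) t) by (unfold seg; ring).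
  eapply Rle_trans; [apply Cmod_seg_le; assumption|]. nra.
Qed.

Definition seg_integrand (g : C -> C) (a b : C) (t : R) : C := (g (seg a b t) * (b - a))%C.

Definition seg_int (g : C -> C) (a b : C) : C :=
  RInt (V:=C_R_CompleteNormedModule) (seg_integrand g a b) 0 1.

Definition cont_on_seg (g : C -> C) (a b : C) : Prop :=
  forall t, 0 <= t <= 1 -> Ccont_at g (seg a b t).

Lemma RInt_C_ext (f h : R -> C) (a b : R) :
  (forall x, Rmin a b < x < Rmax a b -> f x = h x) ->
  RInt (V:=C_R_CompleteNormedModule) f a b = RInt (V:=C_R_CompleteNormedModule) h a b.
Proof. intros H. apply (RInt_ext (V:=C_R_CompleteNormedModule)). exact H. Qed.

Lemma continuous_C_R_eps (phi : R -> C) (t : R) :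
  (forall eps, 0 < eps -> exists delta, 0 < delta /\
     forall s, Rabs (s - t) < delta -> Cmod (phi s - phi t) < eps) ->
  @continuous R_UniformSpace C_R_CompleteNormedModule phi t.
Proof.
  intros H. apply filterlim_locally. intros eps.
  destruct (H eps (cond_pos eps)) as [d [Hd Hs]].
  exists (mkposreal d Hd). intros s Hbs.
  apply (@norm_compat1 R_AbsRing C_R_NormedModule). rewrite norm_C_R. exact (Hs s Hbs).
Qed.

Lemma ex_RInt_seg (g : C -> C) (a b : C) : cont_on_seg g a b ->
  ex_RInt (V:=C_R_CompleteNormedModule) (seg_integrand g a b) 0 1.
Proof.
  intros Hg. apply ex_RInt_continuous. intros t Ht.
  rewrite Rmin_left, Rmax_right in Ht by lra.
  apply continuous_C_R_eps. intros eps Heps.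
  set (K := Cmod (b - a) + 1).
  assert (HK : 0 < K) by (unfold K; pose proof (Cmod_ge_0 (b - a)); lra).
  destruct (Hg t Ht (eps / K)) as [d [Hd Hv]]; [apply Rdiv_lt_0_compat; lra|].
  exists (d / K). split; [apply Rdiv_lt_0_compat; lra|].
  intros s Hs. unfold seg_integrand.
  replace (g (seg a b s) * (b - a) - g (seg a b t) * (b - a))%C
    with ((g (seg a b s) - g (seg a b t)) * (b - a))%C by ring.
  assert (Hst : Cmod (seg a b s - seg a b t) < d).
  { rewrite seg_minus, Cmod_RtoC_mult.
    apply Rle_lt_trans with (Rabs (s - t) * K).
    - apply Rmult_le_compat_l; [apply Rabs_pos|unfold K; lra].
    - apply (Rmult_lt_reg_r (/ K)); [apply Rinv_0_lt_compat; lra|].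
      rewrite Rmult_assoc, Rinv_r, Rmult_1_r by lra. exact Hs. }
  specialize (Hv _ Hst).
  assert (Hgap : (eps / K) * K = eps) by (field; lra).
  rewrite Cmod_mult. pose proof (Cmod_ge_0 (g (seg a b s) - g (seg a b t))).
  assert (Cmod (b - a) <= K) by (unfold K; lra). nra.
Qed.

Lemma seg_int_bound (g : C -> C) (a b : C) (B : R) : cont_on_seg g a b ->
  (forall t, 0 <= t <= 1 -> Cmod (g (seg a b t)) <= B) ->
  Cmod (seg_int g a b) <= Cmod (b - a) * B.
Proof.
  intros Hc HB. unfold seg_int. rewrite <- norm_C_R.
  replace (Cmod (b - a) * B) with ((1 - 0) * (Cmod (b - a) * B)) by ring.
  apply (norm_RInt_le_const (V:=C_R_NormedModule) (seg_integrand g a b)); [lra| |].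
  - intros t Ht. rewrite norm_C_R. unfold seg_integrand. rewrite Cmod_mult, Rmult_comm.
    apply Rmult_le_compat_l; [apply Cmod_ge_0|apply HB; lra].
  - exact (RInt_correct (V:=C_R_CompleteNormedModule) _ _ _ (ex_RInt_seg g a b Hc)).
Qed.

Lemma seg_int_lin (g : C -> C) (a b a' b' : C) (k s0 : R) :
  ex_RInt (V:=C_R_CompleteNormedModule) (seg_integrand g a b) s0 (k + s0) ->
  (forall y, seg a' b' y = seg a b (k * y + s0)) -> (b' - a')%C = (RtoC k * (b - a))%C ->
  seg_int g a' b' = RInt (V:=C_R_CompleteNormedModule) (seg_integrand g a b) s0 (k + s0).
Proof.
  intros Hex Hseg Hdir. unfold seg_int.
  rewrite (RInt_C_ext (seg_integrand g a' b')
            (fun y => @scal R_AbsRing C_R_NormedModule k (seg_integrand g a b (k * y + s0)))).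
  - replace (k + s0) with (k * 1 + s0) by ring. pattern s0 at 2.
    replace s0 with (k * 0 + s0) by ring.
    apply (RInt_comp_lin (V:=C_R_CompleteNormedModule)).
    rewrite Rmult_0_r, Rplus_0_l, Rmult_1_r. exact Hex.
  - intros y _. rewrite scal_C_R. unfold seg_integrand. rewrite Hseg, Hdir. ring.
Qed.

Lemma seg_int_split (g : C -> C) (a b : C) (s : R) : cont_on_seg g a b -> 0 <= s <= 1 ->
  seg_int g a b = (seg_int g a (seg a b s) + seg_int g (seg a b s) b)%C.
Proof.
  intros Hc Hs. pose proof (ex_RInt_seg g a b Hc) as Hex.
  assert (H1 : ex_RInt (V:=C_R_CompleteNormedModule) (seg_integrand g a b) 0 s)
    by (apply ex_RInt_Chasles_1 with 1; [lra|exact Hex]).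
  assert (H2 : ex_RInt (V:=C_R_CompleteNormedModule) (seg_integrand g a b) s 1)
    by (apply ex_RInt_Chasles_2 with 0; [lra|exact Hex]).
  rewrite (seg_int_lin g a b a (seg a b s) s 0), (seg_int_lin g a b (seg a b s) b (1 - s) s).
  - rewrite Rplus_0_r. replace (1 - s + s) with 1 by ring.
    unfold seg_int. rewrite <- plus_C_R. symmetry. apply (RInt_Chasles (V:=C_R_CompleteNormedModule)); assumption.
  - replace (1 - s + s) with 1 by ring. exact H2.
  - intros y. unfold seg. rewrite RtoC_plus, RtoC_mult, RtoC_minus. ring.
  - unfold seg. rewrite RtoC_minus. ring.
  - rewrite Rplus_0_r. exact H1.
  - intros y. unfold seg. rewrite RtoC_plus, RtoC_mult. ring.
  - unfold seg. ring.
Qed.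

Lemma seg_int_swap (g : C -> C) (a b : C) : cont_on_seg g a b ->
  seg_int g b a = (- seg_int g a b)%C.
Proof.
  intros Hc. pose proof (ex_RInt_seg g a b Hc) as Hex.
  rewrite (seg_int_lin g a b b a (- (1)) 1).
  - replace (- (1) + 1) with 0 by ring.
    rewrite <- (opp_RInt_swap (V:=C_R_CompleteNormedModule)) by exact Hex. reflexivity.
  - replace (- (1) + 1) with 0 by ring. apply ex_RInt_swap. exact Hex.
  - intros y. unfold seg. rewrite RtoC_plus, RtoC_mult, RtoC_opp. ring.
  - rewrite RtoC_opp. ring.
Qed.

Lemma seg_int_minus (g1 g2 : C -> C) (a b : C) : cont_on_seg g1 a b -> cont_on_seg g2 a b ->
  seg_int (fun w => g1 w - g2 w)%C a b = (seg_int g1 a b - seg_int g2 a b)%C.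
Proof.
  intros H1 H2. unfold seg_int. rewrite <- minus_C_R.
  rewrite <- (RInt_minus (V:=C_R_CompleteNormedModule)) by (apply ex_RInt_seg; assumption).
  apply RInt_C_ext. intros x _. rewrite minus_C_R. unfold seg_integrand. ring.
Qed.

Lemma seg_int_const (c a b : C) : seg_int (fun _ => c) a b = (c * (b - a))%C.
Proof.
  unfold seg_int, seg_integrand. rewrite (RInt_const (V:=C_R_CompleteNormedModule)), scal_C_R.
  replace (1 - 0) with 1 by ring. ring.
Qed.

Lemma seg_int_refl (g : C -> C) (a : C) : seg_int g a a = RtoC 0.
Proof.
  unfold seg_int. rewrite (RInt_C_ext _ (fun _ => RtoC 0)).
  - rewrite (RInt_const (V:=C_R_CompleteNormedModule)), scal_C_R. ring.
  - intros x _. unfold seg_integrand. ring.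
Qed.

Lemma seg_int_affine (c0 c1 a b : C) :
  seg_int (fun w => c0 + c1 * w)%C a b = (c0 * (b - a) + c1 * (b * b - a * a) * RtoC (/ 2))%C.
Proof.
  set (U := ((c0 + c1 * a) * (b - a))%C). set (W := (c1 * (b - a) * (b - a))%C).
  set (F := fun t : R => @plus C_R_NormedModule (@scal R_AbsRing C_R_NormedModule t U)
                           (@scal R_AbsRing C_R_NormedModule (t * t / 2) W)).
  set (dF := fun t : R => @plus C_R_NormedModule (@scal R_AbsRing C_R_NormedModule 1 U)
                            (@scal R_AbsRing C_R_NormedModule t W)).
  assert (HD : forall t, is_derive F t (dF t)).
  { intros t. apply (@is_derive_plus R_AbsRing C_R_NormedModule).
    - apply (@is_derive_scal_l R_AbsRing C_R_NormedModule). exact (@is_derive_id R_AbsRing _).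
    - apply (@is_derive_scal_l R_AbsRing C_R_NormedModule). auto_derive; [trivial|field]. }
  assert (HI : is_RInt (V:=C_R_CompleteNormedModule) dF 0 1 (minus (F 1) (F 0))).
  { apply (is_RInt_derive (V:=C_R_CompleteNormedModule)); [intros; apply HD|].
    intros t _. apply (@ex_derive_continuous R_AbsRing C_R_NormedModule).
    eexists. apply (@is_derive_plus R_AbsRing C_R_NormedModule).
    - apply (@is_derive_const R_AbsRing C_R_NormedModule).
    - apply (@is_derive_scal_l R_AbsRing C_R_NormedModule). exact (@is_derive_id R_AbsRing _). }
  unfold seg_int. rewrite (RInt_C_ext _ dF).
  - assert (HF : forall t, F t = (RtoC t * U + RtoC (t * t / 2) * W)%C)
      by (intros t; unfold F; rewrite plus_C_R, !scal_C_R; reflexivity).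
    rewrite (is_RInt_unique _ _ _ _ HI), minus_C_R, !HF. unfold U, W.
    replace (1 * 1 / 2) with (/ 2) by field. replace (0 * 0 / 2) with 0 by field.
    rewrite RtoC_inv by lra. field.
  - intros x _. unfold dF, seg_integrand, seg, U, W.
    rewrite !scal_C_R. change (plus ?u ?v) with (Cplus u v). ring.
Qed.

(** * Goursat's theorem *)

Definition convex (P : C -> Prop) : Prop :=
  forall a b t, P a -> P b -> 0 <= t <= 1 -> P (seg a b t).

Definition seq_closed (P : C -> Prop) : Prop :=
  forall (u : nat -> C) (p : C), (forall n, P (u n)) ->
    (forall eps, 0 < eps -> exists N, forall n, (N <= n)%nat -> Cmod (u n - p) < eps) -> P p.

Definition tri_int (g : C -> C) (a b c : C) : C :=
  (seg_int g a b + seg_int g b c + seg_int g c a)%C.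

Definition perimeter (a b c : C) : R := Cmod (b - a) + Cmod (c - b) + Cmod (a - c).

Lemma perimeter_nonneg (a b c : C) : 0 <= perimeter a b c.
Proof.
  unfold perimeter.
  pose proof (Cmod_ge_0 (b - a)). pose proof (Cmod_ge_0 (c - b)). pose proof (Cmod_ge_0 (a - c)).
  lra.
Qed.

Definition mid (x y : C) : C := seg x y (/ 2).

Lemma Cmod_half (x : C) : Cmod (RtoC (/ 2) * x) = Cmod x / 2.
Proof. rewrite Cmod_RtoC_mult, Rabs_right by lra. field. Qed.

Lemma mid_minus_l (x y : C) : (mid x y - x)%C = (RtoC (/ 2) * (y - x))%C.
Proof. unfold mid, seg. ring. Qed.

Lemma mid_minus_r (x y : C) : (y - mid x y)%C = (RtoC (/ 2) * (y - x))%C.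
Proof. unfold mid, seg. rewrite RtoC_inv by lra. field. Qed.

Lemma mid_minus_mid (x y z : C) : (mid z x - mid x y)%C = (RtoC (/ 2) * (z - y))%C.
Proof. unfold mid, seg. rewrite RtoC_inv by lra. field. Qed.

Lemma mid_minus_mid_chain (x y z : C) : (mid y z - mid x y)%C = (RtoC (/ 2) * (z - x))%C.
Proof. unfold mid, seg. rewrite RtoC_inv by lra. field. Qed.

Lemma cont_on_seg_convex (P : C -> Prop) (g : C -> C) (a b : C) : convex P ->
  (forall w, P w -> Ccont_at g w) -> P a -> P b -> cont_on_seg g a b.
Proof. intros HP Hg Ha Hb t Ht. apply Hg, HP; assumption. Qed.

Lemma tri_int_affine (c0 c1 a b c : C) : tri_int (fun w => c0 + c1 * w)%C a b c = RtoC 0.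
Proof. unfold tri_int. rewrite !seg_int_affine. ring. Qed.

(* Subtracting the tangent map at [p] (whose integral over a closed triangle is 0)
   leaves an integrand of size [eps * rho] on the triangle. *)
Lemma tri_int_local_bound (g : C -> C) (a b c p d : C) (eps rho : R) :
  0 <= eps -> cont_on_seg g a b -> cont_on_seg g b c -> cont_on_seg g c a ->
  Cmod (a - p) <= rho -> Cmod (b - p) <= rho -> Cmod (c - p) <= rho ->
  (forall w, Cmod (w - p) <= rho -> Cmod (g w - g p - d * (w - p)) <= eps * Cmod (w - p)) ->
  Cmod (tri_int g a b c) <= perimeter a b c * (eps * rho).
Proof.
  intros Heps Hab Hbc Hca Ha Hb Hc Hd.
  set (aff := fun w => (g p - d * p + d * w)%C).
  assert (Haff : forall x y, cont_on_seg aff x y)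
    by (intros x y t _; exact (Cdiff_eps_cont _ _ _ (Cdiff_eps_affine _ _ _))).
  assert (Hside : forall x y, cont_on_seg g x y -> Cmod (x - p) <= rho -> Cmod (y - p) <= rho ->
            Cmod (seg_int g x y - seg_int aff x y) <= Cmod (y - x) * (eps * rho)).
  { intros x y Hxy Hx Hy. rewrite <- seg_int_minus by auto.
    apply seg_int_bound.
    - intros t Ht. apply Ccont_at_minus; [apply Hxy|apply Haff]; assumption.
    - intros t Ht. pose proof (seg_ball x y p rho t Ht Hx Hy) as Hw.
      replace (g (seg x y t) - aff (seg x y t))%C
        with (g (seg x y t) - g p - d * (seg x y t - p))%C by (unfold aff; ring).
      eapply Rle_trans; [apply Hd; exact Hw|]. apply Rmult_le_compat_l; assumption. }
  replace (tri_int g a b c)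
    with ((seg_int g a b - seg_int aff a b) + (seg_int g b c - seg_int aff b c)
          + (seg_int g c a - seg_int aff c a) + tri_int aff a b c)%C by (unfold tri_int; ring).
  unfold aff at 4. rewrite tri_int_affine, Cplus_0_r. unfold perimeter.
  pose proof (Hside a b Hab Ha Hb). pose proof (Hside b c Hbc Hb Hc).
  pose proof (Hside c a Hca Hc Ha).
  eapply Rle_trans; [apply Cmod_triangle|].
  eapply Rle_trans; [apply Rplus_le_compat_r, Cmod_triangle|]. lra.
Qed.

Lemma tri_int_subdiv (P : C -> Prop) (g : C -> C) (a b c : C) : convex P ->
  (forall w, P w -> Ccont_at g w) -> P a -> P b -> P c ->
  tri_int g a b c = (tri_int g a (mid a b) (mid c a) + tri_int g (mid a b) b (mid b c)
                   + tri_int g (mid c a) (mid b c) c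
                   + tri_int g (mid a b) (mid b c) (mid c a))%C.
Proof.
  intros HP Hg Ha Hb Hc.
  assert (Hmid : forall x y, P x -> P y -> P (mid x y)) by (intros; apply HP; auto; lra).
  assert (Hseg : forall x y, P x -> P y -> cont_on_seg g x y)
    by (intros; apply (cont_on_seg_convex P); assumption).
  unfold tri_int.
  rewrite (seg_int_split g a b (/ 2)), (seg_int_split g b c (/ 2)), (seg_int_split g c a (/ 2))
    by (auto; lra).
  fold (mid a b) (mid b c) (mid c a).
  rewrite (seg_int_swap g (mid a b) (mid c a)), (seg_int_swap g (mid a b) (mid b c)),
    (seg_int_swap g (mid c a) (mid b c)) by auto.
  ring.
Qed.

Record triangle := Tri { tA : C; tB : C; tC : C }.

Definition tri_int_of (g : C -> C) (T : triangle) : C := tri_int g (tA T) (tB T) (tC T).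
Definition tri_perimeter (T : triangle) : R := perimeter (tA T) (tB T) (tC T).
Definition tri_in (P : C -> Prop) (T : triangle) : Prop := P (tA T) /\ P (tB T) /\ P (tC T).

Definition quarter1 (T : triangle) : triangle := Tri (tA T) (mid (tA T) (tB T)) (mid (tC T) (tA T)).
Definition quarter2 (T : triangle) : triangle := Tri (mid (tA T) (tB T)) (tB T) (mid (tB T) (tC T)).
Definition quarter3 (T : triangle) : triangle := Tri (mid (tC T) (tA T)) (mid (tB T) (tC T)) (tC T).
Definition quarter4 (T : triangle) : triangle :=
  Tri (mid (tA T) (tB T)) (mid (tB T) (tC T)) (mid (tC T) (tA T)).

Definition goursat_step (g : C -> C) (T : triangle) : triangle :=
  if Rle_dec (Cmod (tri_int_of g T) / 4) (Cmod (tri_int_of g (quarter1 T))) then quarter1 T else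
  if Rle_dec (Cmod (tri_int_of g T) / 4) (Cmod (tri_int_of g (quarter2 T))) then quarter2 T else
  if Rle_dec (Cmod (tri_int_of g T) / 4) (Cmod (tri_int_of g (quarter3 T))) then quarter3 T else
  quarter4 T.

Lemma goursat_step_in (P : C -> Prop) (g : C -> C) (T : triangle) : convex P ->
  tri_in P T -> tri_in P (goursat_step g T).
Proof.
  intros HP [Ha [Hb Hc]].
  assert (Hmid : forall x y, P x -> P y -> P (mid x y)) by (intros; apply HP; auto; lra).
  unfold goursat_step; repeat destruct Rle_dec; repeat split; simpl; auto.
Qed.

Lemma goursat_step_int (P : C -> Prop) (g : C -> C) (T : triangle) : convex P ->
  (forall w, P w -> Ccont_at g w) -> tri_in P T ->
  Cmod (tri_int_of g T) <= 4 * Cmod (tri_int_of g (goursat_step g T)).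
Proof.
  intros HP Hg [Ha [Hb Hc]].
  assert (Hsum : Cmod (tri_int_of g T) <= Cmod (tri_int_of g (quarter1 T))
            + Cmod (tri_int_of g (quarter2 T)) + Cmod (tri_int_of g (quarter3 T))
            + Cmod (tri_int_of g (quarter4 T))).
  { unfold tri_int_of at 1. rewrite (tri_int_subdiv P) by assumption.
    eapply Rle_trans; [apply Cmod_triangle|]. apply Rplus_le_compat_r.
    eapply Rle_trans; [apply Cmod_triangle|]. apply Rplus_le_compat_r. apply Cmod_triangle. }
  unfold goursat_step; repeat destruct Rle_dec; lra.
Qed.

Lemma goursat_step_perimeter (g : C -> C) (T : triangle) :
  tri_perimeter (goursat_step g T) = tri_perimeter T / 2.
Proof.
  destruct T as [a b c]. unfold tri_perimeter, perimeter.
  unfold goursat_step; repeat destruct Rle_dec; simpl.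
  - rewrite mid_minus_l, mid_minus_mid, mid_minus_r, !Cmod_half. lra.
  - rewrite mid_minus_r, mid_minus_l, mid_minus_mid, !Cmod_half. lra.
  - rewrite mid_minus_mid, mid_minus_r, mid_minus_l, !Cmod_half. lra.
  - rewrite !mid_minus_mid_chain, !Cmod_half, (Cmod_sym c a), (Cmod_sym a b), (Cmod_sym b c). lra.
Qed.

Lemma goursat_step_vertex (g : C -> C) (T : triangle) :
  Cmod (tA (goursat_step g T) - tA T) <= tri_perimeter T / 2.
Proof.
  destruct T as [a b c]. unfold tri_perimeter, perimeter.
  pose proof (Cmod_ge_0 (b - a)). pose proof (Cmod_ge_0 (c - b)). pose proof (Cmod_ge_0 (a - c)).
  unfold goursat_step; repeat destruct Rle_dec; simpl.
  - replace (a - a)%C with (RtoC 0) by ring. rewrite Cmod_0. lra.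
  - rewrite mid_minus_l, Cmod_half. lra.
  - rewrite (Cmod_sym (mid c a) a), mid_minus_r, Cmod_half. lra.
  - rewrite mid_minus_l, Cmod_half. lra.
Qed.

Lemma pow_half_lt (K eps : R) : 0 <= K -> 0 < eps ->
  exists N, forall n, (N <= n)%nat -> K * (/ 2) ^ n < eps.
Proof.
  intros HK He. destruct (pow_lt_1_zero (/ 2)) with (eps / (K + 1)) as [N HN].
  - rewrite Rabs_right; lra.
  - apply Rdiv_lt_0_compat; lra.
  - exists N. intros n Hn. specialize (HN n Hn).
    assert (Hq : 0 <= (/ 2) ^ n) by (apply pow_le; lra).
    rewrite Rabs_right in HN by lra.
    apply (Rmult_lt_compat_r (K + 1)) in HN; [|lra].
    replace (eps / (K + 1) * (K + 1)) with eps in HN by (field; lra). nra.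
Qed.

Lemma R_geometric_limit (x : nat -> R) (L : R) : 0 <= L ->
  (forall n m, (n <= m)%nat -> Rabs (x m - x n) <= L * (/ 2) ^ n) ->
  exists l, forall n, Rabs (l - x n) <= L * (/ 2) ^ n.
Proof.
  intros HL Hx.
  assert (Hcauchy : Cauchy_crit x).
  { intros eps He. destruct (pow_half_lt (2 * L) eps) as [N HN]; [lra|exact He|].
    exists N. intros n m Hn Hm. unfold Rdist.
    pose proof (Hx N n Hn). pose proof (Hx N m Hm). specialize (HN N (le_n N)).
    replace (x n - x m) with ((x n - x N) - (x m - x N)) by ring.
    eapply Rle_lt_trans; [apply Rabs_triang|]. rewrite Rabs_Ropp. lra. }
  destruct (Rcomplete.R_complete x Hcauchy) as [l Hl]. exists l. intros n.
  apply Rnot_lt_le. intros Hlt.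
  destruct (Hl (Rabs (l - x n) - L * (/ 2) ^ n)) as [N HN]; [lra|].
  specialize (HN (max N n) (Nat.le_max_l N n)). unfold Rdist in HN.
  pose proof (Hx n (max N n) (Nat.le_max_r N n)).
  assert (Rabs (l - x n) <= Rabs (x (max N n) - l) + Rabs (x (max N n) - x n)).
  { replace (l - x n) with (- (x (max N n) - l) + (x (max N n) - x n)) by ring.
    eapply Rle_trans; [apply Rabs_triang|]. rewrite Rabs_Ropp. lra. }
  lra.
Qed.

Lemma Cmod_le_Rabs_fst_snd (z : C) : Cmod z <= Rabs (fst z) + Rabs (snd z).
Proof.
  destruct z as [x y]. unfold Cmod; simpl.
  pose proof (Rabs_pos x). pose proof (Rabs_pos y).
  rewrite <- (sqrt_Rsqr (Rabs x + Rabs y)) by lra.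
  apply sqrt_le_1_alt. unfold Rsqr.
  assert (x * x = Rabs x * Rabs x) by (rewrite <- Rabs_mult, Rabs_right; [ring|apply Rle_ge, Rle_0_sqr]).
  assert (y * y = Rabs y * Rabs y) by (rewrite <- Rabs_mult, Rabs_right; [ring|apply Rle_ge, Rle_0_sqr]).
  nra.
Qed.

Lemma C_geometric_limit (u : nat -> C) (L : R) : 0 <= L ->
  (forall n, Cmod (u (S n) - u n) <= L * (/ 2) ^ n / 2) ->
  exists p, forall n, Cmod (u n - p) <= 2 * L * (/ 2) ^ n.
Proof.
  intros HL Hstep.
  assert (Hsum : forall n k, Cmod (u (n + k)%nat - u n) <= L * (/ 2) ^ n - L * (/ 2) ^ (n + k)).
  { intros n k. induction k as [|k IH].
    - rewrite Nat.add_0_r. replace (u n - u n)%C with (RtoC 0) by ring. rewrite Cmod_0. lra.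
    - rewrite Nat.add_succ_r.
      replace (u (S (n + k)) - u n)%C with ((u (S (n + k)) - u (n + k)%nat) + (u (n + k)%nat - u n))%C
        by ring.
      eapply Rle_trans; [apply Cmod_triangle|]. specialize (Hstep (n + k)%nat).
      rewrite <- tech_pow_Rmult. lra. }
  assert (Hu : forall n m, (n <= m)%nat -> Cmod (u m - u n) <= L * (/ 2) ^ n).
  { intros n m Hnm. replace m with (n + (m - n))%nat by lia.
    assert (0 <= (/ 2) ^ (n + (m - n))) by (apply pow_le; lra).
    pose proof (Hsum n (m - n)%nat). nra. }
  assert (Hcoord : forall pr : C -> R, (forall z, Rabs (pr z) <= Cmod z) ->
            (forall x y, pr (x - y)%C = pr x - pr y) ->
            exists l, forall n, Rabs (l - pr (u n)) <= L * (/ 2) ^ n).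
  { intros pr Hpr Hlin. apply R_geometric_limit; [exact HL|].
    intros n m Hnm. rewrite <- Hlin. eapply Rle_trans; [apply Hpr|apply Hu, Hnm]. }
  destruct (Hcoord fst) as [px Hx].
  { intros z. eapply Rle_trans; [apply Rmax_l|apply Rmax_Cmod]. }
  { intros x y. simpl. ring. }
  destruct (Hcoord snd) as [py Hy].
  { intros z. eapply Rle_trans; [apply Rmax_r|apply Rmax_Cmod]. }
  { intros x y. simpl. ring. }
  exists (px, py). intros n. eapply Rle_trans; [apply Cmod_le_Rabs_fst_snd|].
  specialize (Hx n). specialize (Hy n). rewrite Rabs_minus_sym in Hx, Hy.
  unfold Rminus in Hx, Hy. simpl. lra.
Qed.

Lemma goursat_nest (P : C -> Prop) (g : C -> C) (a b c : C) : convex P -> seq_closed P ->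
  (forall w, P w -> Ccont_at g w) -> P a -> P b -> P c ->
  exists (T : nat -> triangle) (p : C), P p /\ forall n,
    tri_in P (T n) /\ tri_perimeter (T n) = perimeter a b c * (/ 2) ^ n /\
    Cmod (tA (T n) - p) <= 2 * perimeter a b c * (/ 2) ^ n /\
    Cmod (tri_int g a b c) <= 4 ^ n * Cmod (tri_int_of g (T n)).
Proof.
  intros HP Hcl Hg Ha Hb Hc.
  set (T := fun n => Nat.iter n (goursat_step g) (Tri a b c)).
  assert (HTS : forall n, T (S n) = goursat_step g (T n)) by reflexivity.
  set (L := perimeter a b c).
  assert (HL : 0 <= L) by apply perimeter_nonneg.
  assert (HT : forall n, tri_in P (T n)).
  { induction n as [|n IH]; [repeat split; assumption|].
    rewrite HTS. apply goursat_step_in; assumption. }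
  assert (Hper : forall n, tri_perimeter (T n) = L * (/ 2) ^ n).
  { induction n as [|n IH]; [rewrite pow_O, Rmult_1_r; reflexivity|].
    rewrite HTS, goursat_step_perimeter, IH. simpl. field. }
  destruct (C_geometric_limit (fun n => tA (T n)) L HL) as [p Hp].
  { intros n. cbv beta. rewrite HTS, <- Hper. apply goursat_step_vertex. }
  exists T, p. split.
  - apply (Hcl (fun n => tA (T n))); [intros n; apply (HT n)|].
    intros eps He. destruct (pow_half_lt (2 * L) eps) as [N HN]; [lra|exact He|].
    exists N. intros n Hn. specialize (Hp n). specialize (HN n Hn). cbv beta in Hp. lra.
  - intros n. repeat split; [apply HT..|apply Hper|apply Hp|].
    induction n as [|n IH]; [rewrite pow_O, Rmult_1_l; apply Rle_refl|].
    pose proof (goursat_step_int P g (T n) HP Hg (HT n)).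
    assert (0 <= 4 ^ n) by (apply pow_le; lra).
    rewrite HTS. simpl. nra.
Qed.

Lemma tri_int_near_tangent (P : C -> Prop) (g : C -> C) (T : triangle) (p d : C) (eps : R) :
  convex P -> (forall w, P w -> Ccont_at g w) -> tri_in P T -> 0 <= eps ->
  Cmod (tA T - p) <= 2 * tri_perimeter T ->
  (forall w, Cmod (w - p) <= 3 * tri_perimeter T ->
     Cmod (g w - g p - d * (w - p)) <= eps * Cmod (w - p)) ->
  Cmod (tri_int_of g T) <= tri_perimeter T * (eps * (3 * tri_perimeter T)).
Proof.
  intros HP Hg [Ha [Hb Hc]] Heps Hp Hd. destruct T as [a b c].
  unfold tri_int_of, tri_perimeter, perimeter in *. simpl in *.
  pose proof (Cmod_ge_0 (b - a)). pose proof (Cmod_ge_0 (c - b)). pose proof (Cmod_ge_0 (a - c)).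
  pose proof (Cmod_via b a p). pose proof (Cmod_via c a p). rewrite (Cmod_sym c a) in *.
  eapply (tri_int_local_bound g a b c p d); try lra; try (apply (cont_on_seg_convex P); assumption).
  exact Hd.
Qed.

(* The nested triangles shrink to a point [p] of [P]; near [p] the tangent approximation
   makes the integral over the [n]-th triangle [o(4^-n)], while it is at least [4^-n]
   times the original one. *)
Theorem goursat (P : C -> Prop) (g : C -> C) : convex P -> seq_closed P ->
  (forall w, P w -> exists d, is_cderive g w d) ->
  forall a b c, P a -> P b -> P c -> tri_int g a b c = RtoC 0.
Proof.
  intros HP Hcl Hd a b c Ha Hb Hc.
  assert (Hg : forall w, P w -> Ccont_at g w).
  { intros w Hw. destruct (Hd w Hw) as [d Hdw].
    exact (Cdiff_eps_cont _ _ _ (proj1 (is_cderive_eps _ _ _) Hdw)). }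
  destruct (goursat_nest P g a b c HP Hcl Hg Ha Hb Hc) as [T [p [HPp HT]]].
  set (L := perimeter a b c) in HT.
  assert (HL : 0 <= L) by apply perimeter_nonneg.
  destruct (Hd p HPp) as [d Hdp]. apply is_cderive_eps in Hdp.
  apply (Cmod_le_eps_0 _ (3 * (L * L)) 1 Rlt_0_1). intros eps [Heps _].
  destruct (Hdp eps Heps) as [delta [Hdelta Hdw]].
  destruct (pow_half_lt (3 * L) delta) as [n Hn]; [lra|exact Hdelta|].
  specialize (Hn n (le_n n)). destruct (HT n) as [HTn [Hper [Hp Hint]]].
  assert (Hlocal := tri_int_near_tangent P g (T n) p d eps HP Hg HTn ltac:(lra)).
  rewrite Hper in Hlocal.
  assert (Hp' : Cmod (tA (T n) - p) <= 2 * (L * (/ 2) ^ n)) by lra.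
  specialize (Hlocal Hp' (fun w Hw => Hdw w ltac:(lra))).
  assert (H4q : 4 ^ n * ((/ 2) ^ n * (/ 2) ^ n) = 1).
  { rewrite <- !Rpow_mult_distr. replace (4 * (/ 2 * / 2)) with 1 by field. apply pow1. }
  eapply Rle_trans; [exact Hint|].
  eapply Rle_trans; [apply Rmult_le_compat_l; [apply pow_le; lra|exact Hlocal]|].
  replace (4 ^ n * (L * (/ 2) ^ n * (eps * (3 * (L * (/ 2) ^ n)))))
    with (3 * (L * L) * eps * (4 ^ n * ((/ 2) ^ n * (/ 2) ^ n))) by ring.
  rewrite H4q. lra.
Qed.

(** * Triangles with a vertex at the origin *)

Lemma disc_convex : convex (fun v => Cmod v < 1).
Proof.
  intros a b t Ha Hb Ht. eapply Rle_lt_trans; [apply Cmod_seg_le; exact Ht|].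
  destruct (Req_dec t 0) as [->|Ht0]; [lra|nra].
Qed.

Definition dotC (u v : C) : R := fst u * fst v + snd u * snd v.

Lemma dotC_bound (u v : C) : Rabs (dotC u v) <= Cmod u * Cmod v.
Proof.
  replace (dotC u v) with (Re (v * Cconj u)%C) by (unfold dotC, Re, Cconj; simpl; ring).
  rewrite <- (Cmod_conj u), Rmult_comm, <- Cmod_mult. apply re_le_Cmod.
Qed.

Lemma dotC_self (z : C) : dotC z z = Cmod z * Cmod z.
Proof.
  unfold dotC, Cmod. rewrite sqrt_sqrt; [simpl; ring|]. simpl. nra.
Qed.

Lemma dotC_seg (z a b : C) (t : R) : dotC z (seg a b t) = (1 - t) * dotC z a + t * dotC z b.
Proof. unfold dotC, seg. simpl. ring. Qed.

Lemma dotC_minus (z a b : C) : dotC z (a - b)%C = dotC z a - dotC z b.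
Proof. unfold dotC. simpl. ring. Qed.

Lemma dotC_scal (z v : C) (e : R) : dotC z (RtoC e * v)%C = e * dotC z v.
Proof. unfold dotC. simpl. ring. Qed.

Definition disc_halfplane (r s : R) (z : C) (v : C) : Prop := Cmod v <= r /\ s <= dotC z v.

Lemma disc_halfplane_convex (r s : R) (z : C) : convex (disc_halfplane r s z).
Proof.
  intros a b t [Ha1 Ha2] [Hb1 Hb2] Ht. split.
  - eapply Rle_trans; [apply Cmod_seg_le; exact Ht|]. nra.
  - rewrite dotC_seg. nra.
Qed.

Lemma disc_halfplane_closed (r s : R) (z : C) : seq_closed (disc_halfplane r s z).
Proof.
  intros u p Hu Hlim. split.
  - apply Rnot_lt_le. intros Hlt.
    destruct (Hlim (Cmod p - r)) as [N HN]; [lra|].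
    specialize (HN N (le_n N)). destruct (Hu N) as [HuN _].
    pose proof (Cmod_le_minus p (u N)). rewrite Cmod_sym in HN. lra.
  - apply Rnot_lt_le. intros Hlt.
    destruct (Hlim ((s - dotC z p) / (Cmod z + 1))) as [N HN].
    { pose proof (Cmod_ge_0 z). apply Rdiv_lt_0_compat; lra. }
    specialize (HN N (le_n N)). destruct (Hu N) as [_ HuN].
    pose proof (Cmod_ge_0 z). pose proof (Cmod_ge_0 (u N - p)).
    assert (Hsmall : Cmod (u N - p) * (Cmod z + 1) < s - dotC z p).
    { apply (Rmult_lt_reg_r (/ (Cmod z + 1))); [apply Rinv_0_lt_compat; lra|].
      rewrite Rmult_assoc, Rinv_r, Rmult_1_r by lra. exact HN. }
    pose proof (dotC_bound z (u N - p)) as Hb. rewrite dotC_minus in Hb.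
    apply Rabs_le_between in Hb. nra.
Qed.

Lemma tri_int_ball_bound (g : C -> C) (a b c p : C) (rho B : R) :
  cont_on_seg g a b -> cont_on_seg g b c -> cont_on_seg g c a ->
  Cmod (a - p) <= rho -> Cmod (b - p) <= rho -> Cmod (c - p) <= rho ->
  (forall w, Cmod (w - p) <= rho -> Cmod (g w) <= B) ->
  Cmod (tri_int g a b c) <= 6 * rho * B.
Proof.
  intros Hab Hbc Hca Ha Hb Hc HB.
  assert (HB0 : 0 <= B) by (eapply Rle_trans; [apply Cmod_ge_0|apply (HB a Ha)]).
  assert (Hside : forall x y, cont_on_seg g x y -> Cmod (x - p) <= rho -> Cmod (y - p) <= rho ->
            Cmod (seg_int g x y) <= 2 * rho * B).
  { intros x y Hxy Hx Hy.
    eapply Rle_trans; [apply seg_int_bound; [exact Hxy|]|].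
    - intros t Ht. apply HB, seg_ball; assumption.
    - pose proof (Cmod_via y p x). rewrite (Cmod_sym p x) in H.
      apply Rmult_le_compat_r; lra. }
  pose proof (Hside a b Hab Ha Hb). pose proof (Hside b c Hbc Hb Hc). pose proof (Hside c a Hca Hc Ha).
  unfold tri_int. eapply Rle_trans; [apply Cmod_triangle|].
  eapply Rle_trans; [apply Rplus_le_compat_r, Cmod_triangle|]. lra.
Qed.

Section CornerCut.

Variable G : C -> C.
Hypothesis G_cont : forall v, Cmod v < 1 -> Ccont_at G v.
Hypothesis G_diff : forall v, Cmod v < 1 -> v <> RtoC 0 -> exists d, is_cderive G v d.

Let G_seg (a b : C) : Cmod a < 1 -> Cmod b < 1 -> cont_on_seg G a b.
Proof. intros. apply (cont_on_seg_convex (fun v => Cmod v < 1)); auto using disc_convex. Qed.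

Lemma tri_int_cut_corner (z w : C) (e : R) : Cmod z < 1 -> Cmod w < 1 -> 0 < e < 1 ->
  tri_int G (RtoC 0) z w
  = (tri_int G (RtoC 0) (RtoC e * z) (RtoC e * w) + tri_int G (RtoC e * z) z w
     + tri_int G (RtoC e * z) w (RtoC e * w))%C.
Proof.
  intros Hz Hw He.
  assert (H0 : Cmod (RtoC 0) < 1) by (rewrite Cmod_0; lra).
  assert (Hez : Cmod (RtoC e * z) < 1) by (rewrite Cmod_RtoC_mult, Rabs_right by lra; nra).
  assert (Hew : Cmod (RtoC e * w) < 1) by (rewrite Cmod_RtoC_mult, Rabs_right by lra; nra).
  unfold tri_int.
  rewrite (seg_int_split G (RtoC 0) z e), (seg_int_split G w (RtoC 0) (1 - e)) by (auto; lra).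
  replace (seg (RtoC 0) z e) with (RtoC e * z)%C by (unfold seg; ring).
  replace (seg w (RtoC 0) (1 - e)) with (RtoC e * w)%C by (unfold seg; rewrite RtoC_minus; ring).
  rewrite (seg_int_swap G (RtoC e * z) (RtoC e * w)), (seg_int_swap G (RtoC e * z) w) by auto.
  ring.
Qed.

(* Away from the corner at [0] the two remaining triangles lie in a closed convex set
   avoiding [0]: a disc cut by a half-plane orthogonal to [z]; this needs
   [|w - z| < |z|], i.e. [w] on the same side as [z]. *)
Lemma tri_int_off_corner (z w : C) (e : R) : Cmod z < 1 -> Cmod w < 1 -> z <> RtoC 0 ->
  Cmod (w - z) < Cmod z -> 0 < e < 1 ->
  tri_int G (RtoC e * z) z w = RtoC 0 /\ tri_int G (RtoC e * z) w (RtoC e * w) = RtoC 0.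
Proof.
  intros Hz Hw Hz0 Hwz He.
  assert (Hzpos : 0 < Cmod z) by (apply Cmod_gt_0; exact Hz0).
  set (r := Rmax (Cmod z) (Cmod w)).
  set (m := Rmin (dotC z z) (dotC z w)).
  assert (Hzz : dotC z z = Cmod z * Cmod z) by apply dotC_self.
  assert (Hzw : 0 < dotC z w).
  { pose proof (dotC_bound z (w - z)) as Hb. rewrite dotC_minus in Hb.
    apply Rabs_le_between in Hb. nra. }
  assert (Hm : 0 < m) by (unfold m; apply Rmin_glb_lt; nra).
  assert (Hmz : m <= dotC z z) by apply Rmin_l.
  assert (Hmw : m <= dotC z w) by apply Rmin_r.
  assert (Hrz : Cmod z <= r) by apply Rmax_l.
  assert (Hrw : Cmod w <= r) by apply Rmax_r.
  set (P := disc_halfplane r (e * m) z).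
  assert (HPdisc : forall v, P v -> Cmod v < 1 /\ v <> RtoC 0).
  { intros v [Hv1 Hv2]. split.
    - unfold r in Hv1. apply Rle_lt_trans with r; [exact Hv1|apply Rmax_lub_lt; assumption].
    - intros ->. unfold dotC in Hv2. simpl in Hv2. nra. }
  assert (HPd : forall v, P v -> exists d, is_cderive G v d)
    by (intros v Hv; destruct (HPdisc v Hv); apply G_diff; assumption).
  assert (Pz : P z) by (split; [exact Hrz|nra]).
  assert (Pw : P w) by (split; [exact Hrw|nra]).
  assert (Pez : P (RtoC e * z)%C).
  { split; [rewrite Cmod_RtoC_mult, Rabs_right by lra; nra|rewrite dotC_scal; nra]. }
  assert (Pew : P (RtoC e * w)%C).
  { split; [rewrite Cmod_RtoC_mult, Rabs_right by lra; pose proof (Cmod_ge_0 w); nra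
           |rewrite dotC_scal; nra]. }
  split; apply (goursat P); try assumption;
    [apply disc_halfplane_convex|apply disc_halfplane_closed
    |apply disc_halfplane_convex|apply disc_halfplane_closed].
Qed.

Lemma tri_int_vertex_0 (z w : C) : Cmod z < 1 -> Cmod w < 1 -> z <> RtoC 0 ->
  Cmod (w - z) < Cmod z -> tri_int G (RtoC 0) z w = RtoC 0.
Proof.
  intros Hz Hw Hz0 Hwz.
  assert (H0 : Cmod (RtoC 0) < 1) by (rewrite Cmod_0; lra).
  destruct (G_cont (RtoC 0) H0 1 Rlt_0_1) as [d0 [Hd0 Hnear]].
  set (B := 1 + Cmod (G (RtoC 0))).
  apply (Cmod_le_eps_0 _ (6 * B) (Rmin d0 1)); [apply Rmin_pos; lra|].
  intros e [He He1].
  assert (Hed0 : e < d0) by (eapply Rlt_le_trans; [exact He1|apply Rmin_l]).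
  assert (He' : 0 < e < 1) by (split; [exact He|eapply Rlt_le_trans; [exact He1|apply Rmin_r]]).
  rewrite (tri_int_cut_corner z w e) by assumption.
  destruct (tri_int_off_corner z w e) as [-> ->]; try assumption.
  rewrite !Cplus_0_r.
  assert (Hsmall : forall v, Cmod v < 1 -> Cmod (RtoC e * v - RtoC 0) <= e).
  { intros v Hv. replace (RtoC e * v - RtoC 0)%C with (RtoC e * v)%C by ring.
    rewrite Cmod_RtoC_mult, Rabs_right by lra. pose proof (Cmod_ge_0 v). nra. }
  assert (Hez : Cmod (RtoC e * z) < 1) by (rewrite Cmod_RtoC_mult, Rabs_right by lra; nra).
  assert (Hew : Cmod (RtoC e * w) < 1) by (rewrite Cmod_RtoC_mult, Rabs_right by lra; nra).
  replace (6 * B * e) with (6 * e * B) by ring.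
  apply (tri_int_ball_bound G _ _ _ (RtoC 0)); try (apply G_seg; assumption); auto.
  - replace (RtoC 0 - RtoC 0)%C with (RtoC 0) by ring. rewrite Cmod_0. lra.
  - intros v Hv. assert (Hvd : Cmod (v - RtoC 0) < d0) by lra. specialize (Hnear v Hvd).
    pose proof (Cmod_le_minus (G v) (G (RtoC 0))). unfold B. lra.
Qed.

End CornerCut.

Lemma Cdiff_eps_primitive (F G : C -> C) (z : C) : Ccont_at G z ->
  (exists d, 0 < d /\ forall w, Cmod (w - z) < d ->
     cont_on_seg G z w /\ F w = (F z + seg_int G z w)%C) ->
  Cdiff_eps F z (G z).
Proof.
  intros HG [d [Hd HF]] eps He.
  destruct (HG eps He) as [d1 [Hd1 Hnear]].
  exists (Rmin d d1). split; [apply Rmin_pos; assumption|].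
  intros w Hw. destruct (HF w (Rlt_le_trans _ _ _ Hw (Rmin_l _ _))) as [Hseg ->].
  assert (Hw1 : Cmod (w - z) < d1) by exact (Rlt_le_trans _ _ _ Hw (Rmin_r _ _)).
  replace (F z + seg_int G z w - F z - G z * (w - z))%C
    with (seg_int G z w - seg_int (fun _ => G z) z w)%C by (rewrite seg_int_const; ring).
  rewrite <- seg_int_minus by (auto; intros t _; apply Ccont_at_const).
  rewrite Rmult_comm. apply seg_int_bound.
  - intros t Ht. apply Ccont_at_minus; [apply Hseg; exact Ht|apply Ccont_at_const].
  - intros t Ht. apply Rlt_le, Hnear.
    replace (seg z w t - z)%C with (seg z w t - seg z w 0)%C by (unfold seg; ring).
    rewrite seg_minus, Cmod_RtoC_mult, Rminus_0_r, Rabs_right by lra.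
    pose proof (Cmod_ge_0 (w - z)). nra.
Qed.

Section Primitive.

Variable G : C -> C.
Hypothesis G_cont : forall v, Cmod v < 1 -> Ccont_at G v.
Hypothesis G_diff : forall v, Cmod v < 1 -> v <> RtoC 0 -> exists d, is_cderive G v d.

Lemma seg_int_0_primitive (z : C) : Cmod z < 1 ->
  Cdiff_eps (fun w => seg_int G (RtoC 0) w) z (G z).
Proof.
  intros Hz. apply Cdiff_eps_primitive; [apply G_cont; exact Hz|].
  assert (H0 : Cmod (RtoC 0) < 1) by (rewrite Cmod_0; lra).
  assert (Hseg : forall a b, Cmod a < 1 -> Cmod b < 1 -> cont_on_seg G a b)
    by (intros; apply (cont_on_seg_convex (fun v => Cmod v < 1)); auto using disc_convex).
  destruct (Ceq_dec z (RtoC 0)) as [->|Hz0].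
  - exists 1. split; [lra|]. intros w Hw.
    replace (w - RtoC 0)%C with w in Hw by ring.
    split; [apply Hseg; assumption|]. rewrite seg_int_refl. ring.
  - assert (Hzpos : 0 < Cmod z) by (apply Cmod_gt_0; exact Hz0).
    exists (Rmin (1 - Cmod z) (Cmod z)). split; [apply Rmin_pos; lra|].
    intros w Hw.
    assert (Hw1 : Cmod (w - z) < 1 - Cmod z) by exact (Rlt_le_trans _ _ _ Hw (Rmin_l _ _)).
    assert (Hw2 : Cmod (w - z) < Cmod z) by exact (Rlt_le_trans _ _ _ Hw (Rmin_r _ _)).
    assert (HwD : Cmod w < 1) by (pose proof (Cmod_le_minus w z); lra).
    split; [apply Hseg; assumption|].
    pose proof (tri_int_vertex_0 G G_cont G_diff z w Hz HwD Hz0 Hw2) as Htri.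
    unfold tri_int in Htri. rewrite (seg_int_swap G (RtoC 0) w) in Htri by auto.
    replace (seg_int G (RtoC 0) w)
      with (seg_int G (RtoC 0) z + seg_int G z w - (seg_int G (RtoC 0) z + seg_int G z w
            + - seg_int G (RtoC 0) w))%C by ring.
    rewrite Htri. ring.
Qed.

End Primitive.

(** * The Cesaro kernel *)

Definition cesaro_kernel (f : C -> C) (w : C) : C := (f w / (w * (RtoC 1 - w)))%C.

(* The kernel with its value [f'(0)] at [0], removable because [f(0) = 0]. *)
Definition cesaro_kernel0 (f : C -> C) (d0 : C) (w : C) : C :=
  if Ceq_dec w (RtoC 0) then d0 else cesaro_kernel f w.

Lemma cesaro_kernel_diff (f : C -> C) (w d : C) : is_cderive f w d ->
  w <> RtoC 0 -> w <> RtoC 1 -> exists l, Cdiff_eps (cesaro_kernel f) w l.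
Proof.
  intros Hf Hw0 Hw1.
  apply is_cderive_eps, is_derive_C_eps in Hf.
  set (h := fun v : C => (v * (RtoC 1 - v))%C).
  assert (Hh0 : h w <> RtoC 0).
  { unfold h. intros E. destruct (Cmult_integral _ _ E) as [E'|E']; [auto|].
    apply Hw1. replace w with (RtoC 1 - (RtoC 1 - w))%C by ring. rewrite E'. ring. }
  assert (Hh : @is_derive C_AbsRing (AbsRing_NormedModule C_AbsRing) h w
                 (mult one (RtoC 1 - w) + mult w (minus zero one))%C).
  { apply (is_derive_mult (K:=C_AbsRing) (fun v => v) (fun v => RtoC 1 - v)%C).
    - apply (is_derive_id (K:=C_AbsRing)).
    - apply (is_derive_minus (K:=C_AbsRing) (V:=AbsRing_NormedModule C_AbsRing)
               (fun _ => RtoC 1) (fun v => v)).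
      + apply (is_derive_const (K:=C_AbsRing) (V:=AbsRing_NormedModule C_AbsRing)).
      + apply (is_derive_id (K:=C_AbsRing)).
    - intros; apply Cmult_comm. }
  assert (Hinv := proj2 (is_derive_C_eps _ _ _) (Cdiff_eps_Cinv (h w) Hh0)).
  assert (Hcomp := is_derive_comp (K:=C_AbsRing) (V:=AbsRing_NormedModule C_AbsRing)
                     Cinv h w _ _ Hinv Hh).
  assert (Hprod := is_derive_mult (K:=C_AbsRing) f (fun v => Cinv (h v)) w _ _ Hf Hcomp
                     ltac:(intros; apply Cmult_comm)).
  eexists. apply is_derive_C_eps. exact Hprod.
Qed.

Section Kernel.

Variables (f : C -> C) (d0 : C).
Hypothesis f_diff : forall v, Cmod v < 1 -> exists d, is_cderive f v d.
Hypothesis f_0 : f (RtoC 0) = RtoC 0.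
Hypothesis f_diff_0 : is_cderive f (RtoC 0) d0.

Lemma cesaro_kernel0_diff (w : C) : Cmod w < 1 -> w <> RtoC 0 ->
  exists l, is_cderive (cesaro_kernel0 f d0) w l.
Proof.
  intros Hw Hw0.
  assert (Hw1 : w <> RtoC 1) by (intros ->; rewrite Cmod_1 in Hw; lra).
  destruct (f_diff w Hw) as [d Hd]. destruct (cesaro_kernel_diff f w d Hd Hw0 Hw1) as [l Hl].
  exists l. apply is_cderive_eps. intros eps He. destruct (Hl eps He) as [dl [Hdl Hv]].
  assert (HA : 0 < Cmod w) by (apply Cmod_gt_0; exact Hw0).
  exists (Rmin dl (Cmod w)). split; [apply Rmin_pos; assumption|].
  intros v Hvw. unfold cesaro_kernel0.
  destruct (Ceq_dec w (RtoC 0)) as [E|_]; [contradiction|].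
  destruct (Ceq_dec v (RtoC 0)) as [->|_].
  - exfalso. pose proof (Rmin_r dl (Cmod w)).
    rewrite Cmod_sym in Hvw. replace (w - RtoC 0)%C with w in Hvw by ring. lra.
  - apply Hv. exact (Rlt_le_trans _ _ _ Hvw (Rmin_l _ _)).
Qed.

(* [f v / (v (1 - v)) - f'(0) = (f v - f'(0) v + f'(0) v^2) / (v (1 - v))], and the
   numerator is [o(|v|)] while [|1 - v| >= 1/2] for [|v| < 1/2]. *)
Lemma cesaro_kernel0_cont_0 : Ccont_at (cesaro_kernel0 f d0) (RtoC 0).
Proof.
  intros eps He.
  destruct (proj1 (is_cderive_eps _ _ _) f_diff_0 (eps / 8)) as [d1 [Hd1 H1]]; [lra|].
  set (K := Cmod d0 + 1). assert (HK : 0 < K) by (unfold K; pose proof (Cmod_ge_0 d0); lra).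
  exists (Rmin d1 (Rmin (/ 2) (eps / (8 * K)))).
  split; [apply Rmin_pos; [assumption|apply Rmin_pos; [lra|apply Rdiv_lt_0_compat; lra]]|].
  intros v Hv. replace (v - RtoC 0)%C with v in Hv by ring.
  assert (Hva : Cmod v < d1) by exact (Rlt_le_trans _ _ _ Hv (Rmin_l _ _)).
  assert (Hvb : Cmod v < / 2)
    by exact (Rlt_le_trans _ _ _ Hv (Rle_trans _ _ _ (Rmin_r _ _) (Rmin_l _ _))).
  assert (Hvc : Cmod v < eps / (8 * K))
    by exact (Rlt_le_trans _ _ _ Hv (Rle_trans _ _ _ (Rmin_r _ _) (Rmin_r _ _))).
  unfold cesaro_kernel0. destruct (Ceq_dec (RtoC 0) (RtoC 0)) as [_|C0]; [|now contradiction C0].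
  destruct (Ceq_dec v (RtoC 0)) as [->|Hv0].
  { replace (d0 - d0)%C with (RtoC 0) by ring. rewrite Cmod_0. lra. }
  assert (Hx : 0 < Cmod v) by (apply Cmod_gt_0; exact Hv0).
  assert (Hy : / 2 <= Cmod (RtoC 1 - v)) by (pose proof (Cmod_one_minus_ge v); lra).
  assert (H1v : (RtoC 1 - v)%C <> RtoC 0) by (intros E; rewrite E, Cmod_0 in Hy; lra).
  specialize (H1 v). replace (v - RtoC 0)%C with v in H1 by ring.
  specialize (H1 Hva). rewrite f_0 in H1.
  unfold cesaro_kernel.
  replace (f v / (v * (RtoC 1 - v)) - d0)%C
    with ((f v - RtoC 0 - d0 * v + d0 * v * v) / (v * (RtoC 1 - v)))%C by (field; auto).
  rewrite Cmod_div by (intros E; destruct (Cmult_integral _ _ E); auto).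
  rewrite Cmod_mult.
  assert (HN : Cmod (f v - RtoC 0 - d0 * v + d0 * v * v)
               <= eps / 8 * Cmod v + Cmod d0 * Cmod v * Cmod v).
  { eapply Rle_trans; [apply Cmod_triangle|]. rewrite !Cmod_mult. lra. }
  set (x := Cmod v) in *. set (y := Cmod (RtoC 1 - v)) in *.
  assert (Hdx : Cmod d0 * x <= eps / 8).
  { apply (Rmult_lt_compat_r (8 * K)) in Hvc; [|lra].
    replace (eps / (8 * K) * (8 * K)) with eps in Hvc by (field; lra).
    unfold K in Hvc. pose proof (Cmod_ge_0 d0). nra. }
  unfold Rdiv. apply (Rmult_lt_reg_r (x * y)); [nra|].
  rewrite Rmult_assoc, Rinv_l, Rmult_1_r by nra.
  assert (Cmod d0 * x * x <= eps / 8 * x) by (apply Rmult_le_compat_r; lra).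
  assert (eps * x * / 2 <= eps * x * y) by (apply Rmult_le_compat_l; nra).
  nra.
Qed.

Lemma cesaro_kernel0_cont (w : C) : Cmod w < 1 -> Ccont_at (cesaro_kernel0 f d0) w.
Proof.
  intros Hw. destruct (Ceq_dec w (RtoC 0)) as [->|Hw0]; [exact cesaro_kernel0_cont_0|].
  destruct (cesaro_kernel0_diff w Hw Hw0) as [l Hl].
  exact (Cdiff_eps_cont _ _ _ (proj1 (is_cderive_eps _ _ _) Hl)).
Qed.

End Kernel.

Definition cesaro_integrand (f : C -> C) (z : C) (t : R) : C :=
  let w := Cmult (RtoC t) z in Cmult (Cdiv (f w) (Cmult w (Cminus (RtoC 1) w))) z.

Lemma cesaro_integrand_seg (f : C -> C) (d0 z : C) (t : R) : 0 < t ->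
  cesaro_integrand f z t = seg_integrand (cesaro_kernel0 f d0) (RtoC 0) z t.
Proof.
  intros Ht. unfold cesaro_integrand, seg_integrand, seg. cbv zeta.
  destruct (Ceq_dec z (RtoC 0)) as [->|Hz]; [ring|].
  replace (RtoC 0 + RtoC t * (z - RtoC 0))%C with (RtoC t * z)%C by ring.
  unfold cesaro_kernel0. destruct (Ceq_dec (RtoC t * z) (RtoC 0)) as [E|_].
  - destruct (Cmult_integral _ _ E) as [E'|E']; [|contradiction].
    apply (f_equal fst) in E'. simpl in E'. lra.
  - unfold cesaro_kernel. ring.
Qed.

Lemma cesaro1_seg_int (f : C -> C) (d0 z : C) :
  cesaro1 f z = seg_int (cesaro_kernel0 f d0) (RtoC 0) z.
Proof.
  apply RInt_C_ext. intros t Ht. rewrite Rmin_left, Rmax_right in Ht by lra.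
  apply cesaro_integrand_seg. lra.
Qed.

Section CesaroDerivative.

Variables (f : C -> C) (d0 : C).
Hypothesis f_diff : forall v, Cmod v < 1 -> exists d, is_cderive f v d.
Hypothesis f_0 : f (RtoC 0) = RtoC 0.
Hypothesis f_diff_0 : is_cderive f (RtoC 0) d0.

Lemma ex_RInt_cesaro (z : C) : Cmod z < 1 ->
  ex_RInt (V:=C_R_CompleteNormedModule) (cesaro_integrand f z) 0 1.
Proof.
  intros Hz.
  apply (ex_RInt_ext (V:=C_R_CompleteNormedModule) (seg_integrand (cesaro_kernel0 f d0) (RtoC 0) z)).
  - intros t Ht. rewrite Rmin_left, Rmax_right in Ht by lra.
    symmetry. apply cesaro_integrand_seg. lra.
  - apply ex_RInt_seg, (cont_on_seg_convex (fun v => Cmod v < 1)); auto using disc_convex.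
    + apply cesaro_kernel0_cont; assumption.
    + rewrite Cmod_0. lra.
Qed.

Lemma cesaro1_derive (z : C) : Cmod z < 1 ->
  is_cderive (cesaro1 f) z (cesaro_kernel0 f d0 z).
Proof.
  intros Hz. apply is_cderive_eps.
  apply (Cdiff_eps_ext _ (fun w => seg_int (cesaro_kernel0 f d0) (RtoC 0) w));
    [intros w; apply cesaro1_seg_int|].
  apply seg_int_0_primitive; [| |exact Hz].
  - apply cesaro_kernel0_cont; assumption.
  - apply cesaro_kernel0_diff; assumption.
Qed.

End CesaroDerivative.

Lemma is_RInt_Cmult (phi : R -> C) (a : C) (x y : R) (l : C) :
  is_RInt (V:=C_R_NormedModule) phi x y l ->
  is_RInt (V:=C_R_NormedModule) (fun t => (a * phi t)%C) x y (a * l)%C.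
Proof.
  intros H.
  assert (H1 : is_RInt (V:=R_NormedModule) (fun t => fst (phi t)) x y (fst l))
    by (apply (is_RInt_fct_extend_fst (U:=R_NormedModule) (V:=R_NormedModule)); exact H).
  assert (H2 : is_RInt (V:=R_NormedModule) (fun t => snd (phi t)) x y (snd l))
    by (apply (is_RInt_fct_extend_snd (U:=R_NormedModule) (V:=R_NormedModule)); exact H).
  destruct a as [ar ai]. destruct l as [l1 l2].
  apply (is_RInt_fct_extend_pair (U:=R_NormedModule) (V:=R_NormedModule)); simpl.
  - apply (is_RInt_ext (V:=R_NormedModule)
             (fun t => minus (scal ar (fst (phi t))) (scal ai (snd (phi t))))).
    + intros t _. unfold minus, plus, opp, scal; simpl. unfold mult; simpl. ring.
    + replace (ar * l1 - ai * l2) with (minus (scal ar l1) (scal ai l2))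
        by (unfold minus, plus, opp, scal; simpl; unfold mult; simpl; ring).
      apply (is_RInt_minus (V:=R_NormedModule)); apply (is_RInt_scal (V:=R_NormedModule)); assumption.
  - apply (is_RInt_ext (V:=R_NormedModule)
             (fun t => plus (scal ar (snd (phi t))) (scal ai (fst (phi t))))).
    + intros t _. unfold plus, scal; simpl. unfold mult; simpl. ring.
    + replace (ar * l2 + ai * l1) with (plus (scal ar l2) (scal ai l1))
        by (unfold plus, scal; simpl; unfold mult; simpl; ring).
      apply (is_RInt_plus (V:=R_NormedModule)); apply (is_RInt_scal (V:=R_NormedModule)); assumption.
Qed.

Lemma cesaro1_linear (f g : C -> C) (a z : C) :
  ex_RInt (V:=C_R_CompleteNormedModule) (cesaro_integrand f z) 0 1 ->
  ex_RInt (V:=C_R_CompleteNormedModule) (cesaro_integrand g z) 0 1 ->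
  cesaro1 (fun w => Cplus (f w) (Cmult a (g w))) z = Cplus (cesaro1 f z) (Cmult a (cesaro1 g z)).
Proof.
  intros Hf Hg.
  assert (Hag : is_RInt (V:=C_R_CompleteNormedModule) (fun t => a * cesaro_integrand g z t)%C 0 1
                  (a * cesaro1 g z)%C)
    by (apply is_RInt_Cmult, (RInt_correct (V:=C_R_CompleteNormedModule)), Hg).
  change (cesaro1 f z) with (RInt (V:=C_R_CompleteNormedModule) (cesaro_integrand f z) 0 1).
  rewrite <- (is_RInt_unique _ _ _ _ Hag), <- plus_C_R.
  rewrite <- (RInt_plus (V:=C_R_CompleteNormedModule));
    [|exact Hf|eexists; exact Hag].
  apply RInt_C_ext. intros t _. unfold cesaro_integrand. cbv zeta. unfold Cdiv.
  change (plus ?u ?v) with (Cplus u v). ring.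
Qed.

(** * Growth of Bloch functions *)

Lemma Cmod_dir (u : C) : exists c : C, Cmod c <= 1 /\ Re (c * u) = Cmod u.
Proof.
  destruct (Ceq_dec u (RtoC 0)) as [->|Hu].
  - exists (RtoC 0). rewrite Cmod_0. split; [lra|]. unfold Re; simpl. ring.
  - assert (Hpos : 0 < Cmod u) by (apply Cmod_gt_0; exact Hu).
    assert (Hnz : RtoC (Cmod u) <> RtoC 0) by (apply RtoC_neq_0; lra).
    exists (Cconj u / RtoC (Cmod u))%C. split.
    + rewrite Cmod_div, Cmod_conj, Cmod_R, Rabs_right by (auto; lra).
      right. field. lra.
    + replace (Cconj u / RtoC (Cmod u) * u)%C with ((u * Cconj u) / RtoC (Cmod u))%C
        by (field; exact Hnz).
      rewrite <- Cmod2_conj, RtoC_pow.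
      replace (RtoC (Cmod u) ^ 2 / RtoC (Cmod u))%C with (RtoC (Cmod u)) by (field; exact Hnz).
      reflexivity.
Qed.

Lemma derivable_pt_lim_Re_radial (f : C -> C) (c z d : C) (t : R) :
  is_cderive f (RtoC t * z)%C d ->
  derivable_pt_lim (fun s => Re (c * f (RtoC s * z))%C) t (Re (c * (d * z))%C).
Proof.
  intros Hd eps He. apply is_cderive_eps in Hd.
  pose proof (Cmod_ge_0 z) as Hz0. pose proof (Cmod_ge_0 c) as Hc0.
  set (K := (Cmod c + 1) * (Cmod z + 1)).
  assert (HK : 0 < K) by (unfold K; nra).
  destruct (Hd (eps / (2 * K))) as [dl [Hdl Hw]]; [apply Rdiv_lt_0_compat; lra|].
  assert (Hdl' : 0 < dl / (Cmod z + 1)) by (apply Rdiv_lt_0_compat; lra).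
  exists (mkposreal _ Hdl'). intros h Hh0 Hh. simpl in Hh.
  set (w := (RtoC (t + h) * z)%C).
  assert (Hwz : (w - RtoC t * z)%C = (RtoC h * z)%C) by (unfold w; rewrite RtoC_plus; ring).
  assert (Hcm : Cmod (w - RtoC t * z) = Rabs h * Cmod z) by (rewrite Hwz, Cmod_RtoC_mult; reflexivity).
  assert (Habs : 0 < Rabs h) by (apply Rabs_pos_lt; exact Hh0).
  assert (Hlt : Cmod (w - RtoC t * z) < dl).
  { rewrite Hcm. apply Rle_lt_trans with (Rabs h * (Cmod z + 1)); [nra|].
    apply (Rmult_lt_reg_r (/ (Cmod z + 1))); [apply Rinv_0_lt_compat; lra|].
    rewrite Rmult_assoc, Rinv_r, Rmult_1_r by lra. exact Hh. }
  specialize (Hw w Hlt). rewrite Hcm in Hw.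
  replace ((Re (c * f w)%C - Re (c * f (RtoC t * z))%C) / h - Re (c * (d * z))%C)
    with (Re (c * (f w - f (RtoC t * z) - d * (w - RtoC t * z)))%C / h)
    by (rewrite Hwz; unfold Re; simpl; field; exact Hh0).
  unfold Rdiv. rewrite Rabs_mult, Rabs_inv.
  apply (Rmult_lt_reg_r (Rabs h)); [exact Habs|].
  rewrite Rmult_assoc, Rinv_l, Rmult_1_r by lra.
  eapply Rle_lt_trans; [apply re_le_Cmod|]. rewrite Cmod_mult.
  apply Rle_lt_trans with ((Cmod c + 1) * (eps / (2 * K) * (Rabs h * Cmod z)));
    [apply Rmult_le_compat; try apply Cmod_ge_0; lra|].
  replace ((Cmod c + 1) * (eps / (2 * K) * (Rabs h * Cmod z)))
    with (eps * Rabs h * (Cmod z / (2 * (Cmod z + 1)))) by (unfold K; field; lra).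
  assert (Cmod z / (2 * (Cmod z + 1)) < 1).
  { apply (Rmult_lt_reg_r (2 * (Cmod z + 1))); [lra|].
    unfold Rdiv. rewrite Rmult_assoc, Rinv_l by lra. lra. }
  assert (0 < eps * Rabs h) by (apply Rmult_lt_0_compat; lra).
  nra.
Qed.

(* Mean value inequality along the radius [0, z], applied to [s |-> Re (c f(s z)) - psi s]
   for a unit [c] aligning [f z - f 0] with the real axis. *)
Lemma radial_mean_value (f : C -> C) (z : C) (psi dpsi : R -> R) :
  (forall t, 0 <= t <= 1 -> exists d, is_cderive f (RtoC t * z)%C d) ->
  (forall t, 0 <= t <= 1 -> derivable_pt_lim psi t (dpsi t)) ->
  (forall t d, 0 <= t <= 1 -> is_cderive f (RtoC t * z)%C d -> Cmod d * Cmod z <= dpsi t) ->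
  Cmod (f z - f (RtoC 0)) <= psi 1 - psi 0.
Proof.
  intros Hf Hpsi Hb.
  destruct (Cmod_dir (f z - f (RtoC 0))%C) as [c [Hc Hcu]].
  set (h := fun s => Re (c * f (RtoC s * z))%C - psi s).
  set (dh := fun s => Re (c * (C_derive f (RtoC s * z) * z))%C - dpsi s).
  assert (Hder : forall t, 0 <= t <= 1 -> derivable_pt_lim h t (dh t)).
  { intros t Ht. destruct (Hf t Ht) as [d Hd].
    unfold dh. rewrite (is_C_derive_unique _ _ _ Hd).
    apply (derivable_pt_lim_minus (fun s => Re (c * f (RtoC s * z))%C) psi);
      [apply derivable_pt_lim_Re_radial; exact Hd|apply Hpsi; exact Ht]. }
  destruct (MVT_cor2 h dh 0 1 Rlt_0_1 Hder) as [xi [Hxi Hxi01]].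
  assert (Hdh : dh xi <= 0).
  { destruct (Hf xi ltac:(lra)) as [d Hd].
    unfold dh. rewrite (is_C_derive_unique _ _ _ Hd).
    specialize (Hb xi d ltac:(lra) Hd).
    assert (Re (c * (d * z))%C <= Cmod d * Cmod z).
    { eapply Rle_trans; [apply Rle_abs|]. eapply Rle_trans; [apply re_le_Cmod|].
      rewrite !Cmod_mult. pose proof (Cmod_ge_0 d). pose proof (Cmod_ge_0 z).
      assert (0 <= Cmod d * Cmod z) by nra. nra. }
    lra. }
  unfold h in Hxi. replace (RtoC 1 * z)%C with z in Hxi by ring.
  replace (RtoC 0 * z)%C with (RtoC 0) in Hxi by ring.
  assert (Hre : Re (c * f z)%C - Re (c * f (RtoC 0))%C = Cmod (f z - f (RtoC 0)))
    by (rewrite <- Hcu; unfold Re; simpl; ring).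
  nra.
Qed.

Lemma Rpower_pos (x y : R) : 0 < Rpower x y.
Proof. apply exp_pos. Qed.

Lemma Rpower_1_base (y : R) : Rpower 1 y = 1.
Proof. unfold Rpower. rewrite ln_1, Rmult_0_r. apply exp_0. Qed.

Definition cesaro_bloch_const (alpha : R) : R := 2 * Rpower 2 alpha * (1 + / (alpha - 1)).

Lemma cesaro_bloch_const_ge_1 (alpha : R) : 1 < alpha -> 1 <= cesaro_bloch_const alpha.
Proof.
  intros Ha. unfold cesaro_bloch_const.
  assert (1 <= Rpower 2 alpha) by (rewrite <- (Rpower_1_base alpha); apply Rle_Rpower_l; lra).
  assert (0 < / (alpha - 1)) by (apply Rinv_0_lt_compat; lra).
  nra.
Qed.

Section BlochGrowth.

Variables (alpha M : R) (f : C -> C).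
Hypothesis f_diff : forall v, Cmod v < 1 -> exists d, is_cderive f v d.
Hypothesis f_0 : f (RtoC 0) = RtoC 0.
Hypothesis f_bloch : bloch_bound alpha f M.

Lemma radial_in_disc (z : C) (t : R) : Cmod z < 1 -> 0 <= t <= 1 ->
  Cmod (RtoC t * z) = t * Cmod z /\ t * Cmod z < 1.
Proof.
  intros Hz Ht. rewrite Cmod_RtoC_mult, Rabs_right by lra.
  pose proof (Cmod_ge_0 z). split; [reflexivity|nra].
Qed.

Lemma f_diff_radial (z : C) : Cmod z < 1 ->
  forall t, 0 <= t <= 1 -> exists d, is_cderive f (RtoC t * z)%C d.
Proof.
  intros Hz t Ht. apply f_diff. destruct (radial_in_disc z t Hz Ht) as [-> H]. exact H.
Qed.

Lemma bloch_bound_radial (z : C) (t : R) (d : C) : 0 <= alpha -> Cmod z < 1 -> 0 <= t <= 1 ->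
  is_cderive f (RtoC t * z)%C d -> Rpower (1 - t * Cmod z) alpha * Cmod d <= M.
Proof.
  intros Ha Hz Ht Hd. destruct (radial_in_disc z t Hz Ht) as [Htz Hlt].
  assert (Htz0 : 0 <= t * Cmod z) by (pose proof (Cmod_ge_0 z); nra).
  assert (HB := f_bloch _ _ ltac:(rewrite Htz; exact Hlt) Hd). rewrite Htz in HB.
  eapply Rle_trans; [|exact HB]. apply Rmult_le_compat_r; [apply Cmod_ge_0|].
  apply Rle_Rpower_l; [exact Ha|]. split; [lra|]. simpl. nra.
Qed.

Lemma bloch0_growth_small (z : C) : 0 <= alpha -> Cmod z < 1 ->
  Cmod (f z) * Rpower (1 - Cmod z) alpha <= Cmod z * M.
Proof.
  intros Ha Hz. pose proof (Cmod_ge_0 z).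
  set (P1 := Rpower (1 - Cmod z) alpha). assert (HP1 : 0 < P1) by apply Rpower_pos.
  set (A := Cmod z * M / P1).
  assert (Hgrowth : Cmod (f z) <= 1 * A - 0 * A).
  { replace (Cmod (f z)) with (Cmod (f z - f (RtoC 0))) by (rewrite f_0; f_equal; ring).
    apply (radial_mean_value f z (fun t => t * A) (fun _ => A)); [apply f_diff_radial; exact Hz| |].
    - intros t _. apply is_derive_Reals. auto_derive; [trivial|ring].
    - intros t d Ht Hd. pose proof (bloch_bound_radial z t d Ha Hz Ht Hd).
      assert (P1 <= Rpower (1 - t * Cmod z) alpha) by (apply Rle_Rpower_l; [exact Ha|split; nra]).
      assert (P1 * Cmod d <= M) by (pose proof (Cmod_ge_0 d); nra).
      unfold A, Rdiv. apply (Rmult_le_reg_r P1); [exact HP1|].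
      rewrite (Rmult_assoc (Cmod z * M)), Rinv_l by lra. nra. }
  apply (Rmult_le_compat_r P1) in Hgrowth; [|lra].
  replace ((1 * A - 0 * A) * P1) with (Cmod z * M) in Hgrowth by (unfold A; field; lra).
  exact Hgrowth.
Qed.

(* Integrating [|f'(t z)| |z| <= M |z| (1 - t |z|)^(-alpha)] gives the primitive
   [M (1 - t |z|)^(1 - alpha) / (alpha - 1)]. *)
Lemma bloch0_growth (z : C) : 1 < alpha -> 0 <= M -> Cmod z < 1 ->
  Cmod (f z) * (alpha - 1) <= M * Rpower (1 - Cmod z) (1 - alpha).
Proof.
  intros Ha HM Hz. pose proof (Cmod_ge_0 z). set (rho := Cmod z) in *.
  set (psi := fun t => M / (alpha - 1) * Rpower (1 - t * rho) (1 - alpha)).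
  set (dpsi := fun t => M * rho * Rpower (1 - t * rho) (- alpha)).
  assert (Hgrowth : Cmod (f z) <= psi 1 - psi 0).
  { replace (Cmod (f z)) with (Cmod (f z - f (RtoC 0))) by (rewrite f_0; f_equal; ring).
    apply (radial_mean_value f z psi dpsi); [apply f_diff_radial; exact Hz| |].
    - intros t Ht.
      assert (Hlin : derivable_pt_lim (fun s => 1 - s * rho) t (- rho))
        by (apply is_derive_Reals; auto_derive; [trivial|ring]).
      assert (Hpos : 0 < 1 - t * rho) by nra.
      pose proof (derivable_pt_lim_comp _ _ t _ _ Hlin
                    (derivable_pt_lim_power (1 - t * rho) (1 - alpha) Hpos)) as Hcomp.
      pose proof (derivable_pt_lim_scal _ (M / (alpha - 1)) t _ Hcomp) as Hscal.
      unfold dpsi. replace (M * rho * Rpower (1 - t * rho) (- alpha))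
        with (M / (alpha - 1) * ((1 - alpha) * Rpower (1 - t * rho) (1 - alpha - 1) * - rho)).
      + exact Hscal.
      + replace (1 - alpha - 1) with (- alpha) by ring. field. lra.
    - intros t d Ht Hd. pose proof (bloch_bound_radial z t d ltac:(lra) Hz Ht Hd) as Hdc.
      fold rho in Hdc. unfold dpsi. rewrite Rpower_Ropp.
      set (Q := Rpower (1 - t * rho) alpha) in *. assert (HQ : 0 < Q) by apply Rpower_pos.
      assert (Cmod d <= M * / Q).
      { apply (Rmult_le_reg_l Q); [exact HQ|].
        rewrite <- Rmult_assoc, (Rmult_comm Q M), Rmult_assoc, Rinv_r by lra. lra. }
      replace (M * rho * / Q) with (M * / Q * rho) by ring.
      apply Rmult_le_compat_r; assumption. }
  unfold psi in Hgrowth. rewrite Rmult_1_l, Rmult_0_l, Rminus_0_r, Rpower_1_base in Hgrowth.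
  assert (0 <= M / (alpha - 1)) by (apply Rdiv_le_0_compat; lra).
  assert (Hb : Cmod (f z) <= M / (alpha - 1) * Rpower (1 - rho) (1 - alpha)) by lra.
  apply (Rmult_le_compat_r (alpha - 1)) in Hb; [|lra].
  replace (M / (alpha - 1) * Rpower (1 - rho) (1 - alpha) * (alpha - 1))
    with (M * Rpower (1 - rho) (1 - alpha)) in Hb by (field; lra).
  exact Hb.
Qed.

(* The crude bound is used for [|z| <= 1/2], the sharp one for [|z| > 1/2]. *)
Lemma bloch0_growth_weighted (z : C) : 1 < alpha -> 0 <= M -> Cmod z < 1 ->
  Rpower (1 - Cmod z) alpha * Cmod (f z) <= 2 * (1 + / (alpha - 1)) * M * Cmod z * (1 - Cmod z).
Proof.
  intros Ha HM Hz. pose proof (Cmod_ge_0 z) as Hz0. pose proof (Cmod_ge_0 (f z)).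
  set (rho := Cmod z) in *. set (P1 := Rpower (1 - rho) alpha). set (i := / (alpha - 1)).
  assert (HP1 : 0 < P1) by apply Rpower_pos.
  assert (Hi : 0 < i) by (apply Rinv_0_lt_compat; lra).
  destruct (Rle_dec rho (/ 2)) as [Hs|Hs].
  - pose proof (bloch0_growth_small z ltac:(lra) Hz) as Hc. fold rho P1 in Hc.
    replace (2 * (1 + i) * M * rho * (1 - rho)) with (M * rho * (2 * (1 + i) * (1 - rho))) by ring.
    apply Rle_trans with (M * rho); [lra|].
    rewrite <- (Rmult_1_r (M * rho)) at 1. apply Rmult_le_compat_l; nra.
  - pose proof (bloch0_growth z Ha HM Hz) as Hc. fold rho in Hc.
    replace (Rpower (1 - rho) (1 - alpha)) with ((1 - rho) * / P1) in Hc
      by (unfold P1; replace (1 - alpha) with (1 + - alpha) by ring;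
          rewrite Rpower_plus, Rpower_1, Rpower_Ropp by lra; reflexivity).
    apply (Rmult_le_compat_r (P1 * i)) in Hc; [|nra].
    replace (Cmod (f z) * (alpha - 1) * (P1 * i)) with (P1 * Cmod (f z)) in Hc
      by (unfold i; field; lra).
    replace (M * ((1 - rho) * / P1) * (P1 * i)) with (M * (1 - rho) * i) in Hc by (field; lra).
    replace (2 * (1 + i) * M * rho * (1 - rho)) with (M * (1 - rho) * (2 * (1 + i) * rho)) by ring.
    apply (Rle_trans _ _ _ Hc). apply Rmult_le_compat_l; nra.
Qed.

Lemma cesaro_kernel_bloch (z : C) : 1 < alpha -> 0 <= M -> Cmod z < 1 -> z <> RtoC 0 ->
  Rpower (1 - Cmod z ^ 2) alpha * Cmod (cesaro_kernel f z) <= cesaro_bloch_const alpha * M.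
Proof.
  intros Ha HM Hz Hz0.
  assert (Hzp : 0 < Cmod z) by (apply Cmod_gt_0; exact Hz0).
  pose proof (Cmod_one_minus_ge z) as Hy.
  assert (H1z : (RtoC 1 - z)%C <> RtoC 0) by (intros E; rewrite E, Cmod_0 in Hy; lra).
  pose proof (bloch0_growth_weighted z Ha HM Hz) as Hw.
  unfold cesaro_kernel. rewrite Cmod_div, Cmod_mult by (intros E; destruct (Cmult_integral _ _ E); auto).
  set (rho := Cmod z) in *. set (y := Cmod (RtoC 1 - z)) in *.
  set (W := 2 * (1 + / (alpha - 1)) * M * rho * (1 - rho)) in Hw.
  assert (Hi : 0 < / (alpha - 1)) by (apply Rinv_0_lt_compat; lra).
  assert (HKM : 0 <= 2 * (1 + / (alpha - 1)) * M * rho) by (repeat apply Rmult_le_pos; lra).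
  assert (HW : 0 <= W) by (unfold W; apply Rmult_le_pos; lra).
  assert (Hsplit : Rpower (1 - rho ^ 2) alpha = Rpower (1 + rho) alpha * Rpower (1 - rho) alpha)
    by (rewrite Rpower_mult_distr by lra; f_equal; ring).
  assert (H2 : Rpower (1 + rho) alpha <= Rpower 2 alpha) by (apply Rle_Rpower_l; lra).
  pose proof (Rpower_pos (1 + rho) alpha).
  assert (Hmain : Rpower (1 + rho) alpha * (Rpower (1 - rho) alpha * Cmod (f z))
                  <= cesaro_bloch_const alpha * M * (rho * y)).
  { apply Rle_trans with (Rpower 2 alpha * W).
    - apply Rmult_le_compat; try lra.
      apply Rmult_le_pos; [apply Rlt_le, Rpower_pos|apply Cmod_ge_0].
    - unfold W, cesaro_bloch_const.
      replace (2 * Rpower 2 alpha * (1 + / (alpha - 1)) * M * (rho * y))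
        with (Rpower 2 alpha * (2 * (1 + / (alpha - 1)) * M * rho) * y) by ring.
      replace (Rpower 2 alpha * (2 * (1 + / (alpha - 1)) * M * rho * (1 - rho)))
        with (Rpower 2 alpha * (2 * (1 + / (alpha - 1)) * M * rho) * (1 - rho)) by ring.
      apply Rmult_le_compat_l; [|exact Hy].
      pose proof (Rpower_pos 2 alpha). apply Rmult_le_pos; lra. }
  assert (Hry : 0 < rho * y) by nra.
  rewrite Hsplit. apply (Rmult_le_reg_r (rho * y)); [exact Hry|].
  replace (Rpower (1 + rho) alpha * Rpower (1 - rho) alpha * (Cmod (f z) / (rho * y)) * (rho * y))
    with (Rpower (1 + rho) alpha * (Rpower (1 - rho) alpha * Cmod (f z))) by (field; lra).
  exact Hmain.
Qed.

Lemma cesaro1_bloch_bound : 1 < alpha -> bloch_bound alpha (cesaro1 f) (cesaro_bloch_const alpha * M).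
Proof.
  intros Ha z d Hz Hd.
  assert (H0 : Cmod (RtoC 0) < 1) by (rewrite Cmod_0; lra).
  destruct (f_diff (RtoC 0) H0) as [d0 Hd0].
  assert (HM : 0 <= M).
  { pose proof (f_bloch _ _ H0 Hd0). pose proof (Rpower_pos (1 - Cmod (RtoC 0) ^ 2) alpha).
    pose proof (Cmod_ge_0 d0). nra. }
  pose proof (cesaro_bloch_const_ge_1 alpha Ha) as HK.
  assert (Hker := cesaro1_derive f d0 f_diff f_0 Hd0 z Hz).
  replace d with (cesaro_kernel0 f d0 z)
    by (rewrite <- (is_C_derive_unique _ _ _ Hd); exact (eq_sym (is_C_derive_unique _ _ _ Hker))).
  unfold cesaro_kernel0. destruct (Ceq_dec z (RtoC 0)) as [->|Hz0].
  - pose proof (f_bloch _ _ H0 Hd0). nra.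
  - apply cesaro_kernel_bloch; assumption.
Qed.

End BlochGrowth.

Theorem corollary2p1 :
  forall alpha : R, 1 < alpha ->
  (* linearity of C_1 on B_alpha^0 (as functions on the disc) *)
  (forall (f g : C -> C) (a : C), in_bloch0 alpha f -> in_bloch0 alpha g ->
     forall z : C, Cmod z < 1 ->
       cesaro1 (fun w => Cplus (f w) (Cmult a (g w))) z
       = Cplus (cesaro1 f z) (Cmult a (cesaro1 g z))) /\
  (* C_1 maps B_alpha^0 into itself, boundedly *)
  exists K : R, 0 <= K /\
    forall f : C -> C, in_bloch0 alpha f ->
      in_bloch0 alpha (cesaro1 f) /\
      forall M : R, bloch_bound alpha f M -> bloch_bound alpha (cesaro1 f) (K * M).
Proof.
  intros alpha Ha.
  assert (H0 : Cmod (RtoC 0) < 1) by (rewrite Cmod_0; lra).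
  split.
  - intros f g a [Hf [Hf0 _]] [Hg [Hg0 _]] z Hz.
    destruct (Hf (RtoC 0) H0) as [df Hdf]. destruct (Hg (RtoC 0) H0) as [dg Hdg].
    apply cesaro1_linear; [exact (ex_RInt_cesaro f df Hf Hf0 Hdf z Hz)
                          |exact (ex_RInt_cesaro g dg Hg Hg0 Hdg z Hz)].
  - exists (cesaro_bloch_const alpha).
    split; [pose proof (cesaro_bloch_const_ge_1 alpha Ha); lra|].
    intros f [Hf [Hf0 [M HM]]]. destruct (Hf (RtoC 0) H0) as [d0 Hd0].
    split; [split; [|split]|].
    + intros z Hz. eexists. exact (cesaro1_derive f d0 Hf Hf0 Hd0 z Hz).
    + rewrite (cesaro1_seg_int f d0). apply seg_int_refl.
    + exists (cesaro_bloch_const alpha * M). apply cesaro1_bloch_bound; assumption.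
    + intros M' HM'. apply cesaro1_bloch_bound; assumption.
Qed.
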